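(* A Sturmian sequence in $\{H,V\}$ is symmetric if and only if it is the cutting sequence of a uniformly distributed geodesic on the square torus passing through a Weierstrass point of the torus. Furthermore: (i) even symmetric Sturmian sequences correspond to geodesics passing through the center point $D$; (ii) almost symmetric Sturmian sequences correspond to geodesics passing through the corner point $A$; (iii) odd symmetric Sturmian sequences correspond to geodesics passing through $B$ or $C$.
   Context: The square torus $\mathbb{T}^2=\mathbb{C}/\mathbb{Z}[i]$ is represented as the unit square with top and bottom edges labeled $V$ and left and right edges labeled $H$. Geodesics have positive slope and are traversed North-East; the cutting sequence of a biinfinite geodesic is the biinfinite sequence of labels of edges crossed, where passing through the corner records two symbols $HV$ or $VH$. A geodesic is uniformly distributed when its slope is irrational. A Sturmian sequence is a biinfinite sequence over two letters that is not eventually periodic and has exactly $n+1$ distinct subwords of each length $n$. The Weierstrass points (fixed points of the $180^\circ$ rotation $\iota$ of the square about its center) are: $A$ the corner, $B$ the midpoint of the horizontal edge $V$, $C$ the midpoint of the vertical edge $H$, and $D$ the center of the square. A sequence $\epsilon$ is odd symmetric if there is $N$ with $\epsilon_{N+k}=\epsilon_{N-k}$ for all $k\ge0$; even symmetric if there is $N$ with $\epsilon_{N+k}=\epsilon_{N-k-1}$ for all $k\ge0$; almost symmetric if there is $N$ with $\epsilon_{N+k}=\epsilon_{N-k-1}$ for all $k\ge1$ and $\epsilon_N\ne\epsilon_{N-1}$; symmetric if it is odd, even, or almost symmetric. *)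

From Stdlib Require Import Reals ZArith List.
Open Scope R_scope.

(** The two edge labels of the unit square: [H] labels the vertical edges
    (left/right, lines x in Z), [V] the horizontal edges (top/bottom,
    lines y in Z). *)
Inductive letter : Type := H | V.

Definition bseq := Z -> letter.

Definition factor (eps : bseq) (k : Z) (n : nat) : list letter :=
  map (fun i => eps (k + Z.of_nat i)%Z) (seq 0 n).

Definition eventually_periodic (eps : bseq) : Prop :=
  exists (p N : Z), (0 < p)%Z /\ forall n : Z, (N <= n)%Z -> eps (n + p)%Z = eps n.

Definition complexity_n_plus_1 (eps : bseq) : Prop :=
  forall n : nat, exists s : list (list letter),
    NoDup s /\ length s = S n /\
    forall w, In w s <-> exists k : Z, w = factor eps k n.

Definition sturmian (eps : bseq) : Prop :=
  ~ eventually_periodic eps /\ complexity_n_plus_1 eps.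

Definition odd_symmetric (eps : bseq) : Prop :=
  exists N : Z, forall k : Z, (0 <= k)%Z -> eps (N + k)%Z = eps (N - k)%Z.

Definition even_symmetric (eps : bseq) : Prop :=
  exists N : Z, forall k : Z, (0 <= k)%Z -> eps (N + k)%Z = eps (N - k - 1)%Z.

Definition almost_symmetric (eps : bseq) : Prop :=
  exists N : Z, (forall k : Z, (1 <= k)%Z -> eps (N + k)%Z = eps (N - k - 1)%Z)
                /\ eps N <> eps (N - 1)%Z.

Definition symmetric (eps : bseq) : Prop :=
  odd_symmetric eps \/ even_symmetric eps \/ almost_symmetric eps.

(** Geometry of the square torus C / Z[i] = R^2 / Z^2.
    A geodesic of positive slope a, traversed North-East, is the image of the
    line t |-> (x0 + t, y0 + a t), t in R. *)
Definition is_int (r : R) : Prop := exists k : Z, r = IZR k.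

Definition irrational (a : R) : Prop :=
  forall p q : Z, q <> 0%Z -> a <> IZR p / IZR q.

Definition uniformly_distributed (a : R) : Prop := 0 < a /\ irrational a.

Definition crosses (x0 y0 a : R) (l : letter) (t : R) : Prop :=
  match l with
  | H => is_int (x0 + t)
  | V => is_int (y0 + a * t)
  end.

(** When two crossings happen at the same time (passing through the corner),
    their relative order (HV or VH) is not constrained. *)
Definition cutting_sequence (x0 y0 a : R) (eps : bseq) : Prop :=
  exists tau : Z -> R,
    (forall n : Z, tau n <= tau (n + 1)%Z) /\
    (forall n : Z, crosses x0 y0 a (eps n) (tau n)) /\
    (forall (l : letter) (t : R), crosses x0 y0 a l t ->
        exists! n : Z, tau n = t /\ eps n = l).

Definition passes_through (x0 y0 a px py : R) : Prop :=
  exists t : R, is_int (x0 + t - px) /\ is_int (y0 + a * t - py).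

(** Weierstrass points: A corner, B midpoint of horizontal edge V,
    C midpoint of vertical edge H, D center. *)
Definition ptA : R * R := (0, 0).
Definition ptB : R * R := (1/2, 0).
Definition ptC : R * R := (0, 1/2).
Definition ptD : R * R := (1/2, 1/2).

Definition through (x0 y0 a : R) (P : R * R) : Prop :=
  passes_through x0 y0 a (fst P) (snd P).

Definition cut_seq_through (Q : (R * R) -> Prop) (eps : bseq) : Prop :=
  exists x0 y0 a : R, uniformly_distributed a /\
    (exists P, Q P /\ through x0 y0 a P) /\ cutting_sequence x0 y0 a eps.

Definition weierstrass (P : R * R) : Prop :=
  P = ptA \/ P = ptB \/ P = ptC \/ P = ptD.

(* A Sturmian sequence is balanced: the right special factor of each length
   is unique and recurs on both sides, and this forbids two windows of equal
   length whose numbers of [V] differ by 2 (Morse-Hedlund).  Balance gives an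
   irrational slope [a] such that the discrepancy [h n - a n] of the V-count
   [h] oscillates by at most 1, and [eps] is the cutting sequence of the line
   of slope [a / (1 - a)] whose intercept is a threshold separating the
   discrepancies at positions of [H] from those at [V].  A mirror symmetry of
   [eps] is a reflection symmetry of the discrepancies, which fixes the
   threshold so that the line passes through [D] (even), [A] (almost: the two
   central letters are the corner crossing) or [B]/[C] (odd).  Conversely the
   half-turn about a Weierstrass point reverses the line, so the reversed
   cutting sequence is a shift of the original one; the type of the resulting
   symmetry depends on whether the point lies on no, one or two lattice lines. *)

From Stdlib Require Import Reals ZArith List Lia Lra Classical ClassicalDescription ClassicalEpsilon.
Import ListNotations.

(** * Words and factors *)

Definition vweight (l : letter) : Z := match l with H => 0%Z | V => 1%Z end.

Lemma vweight_inj a b : vweight a = vweight b -> a = b.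
Proof. destruct a, b; simpl; congruence. Qed.

Lemma vweight_bound a : (0 <= vweight a <= 1)%Z.
Proof. destruct a; simpl; lia. Qed.

Definition flip (l : letter) : letter := match l with H => V | V => H end.

Lemma flip_neq l : flip l <> l.
Proof. destruct l; discriminate. Qed.

Lemma letter_cases_neq (a b c : letter) : a <> b -> c = a \/ c = b.
Proof. destruct a, b, c; auto; congruence. Qed.

Lemma letter_eq_of_neq (a b c : letter) : a <> c -> b <> c -> a = b.
Proof. destruct a, b, c; congruence. Qed.

Lemma pigeonhole {A : Type} (g : nat -> A) (s : list A) (m : nat) :
  length s = m -> (forall i, (i <= m)%nat -> In (g i) s) ->
  exists i j, (i < j <= m)%nat /\ g i = g j.
Proof.
  intros Hl Hin. apply NNPP. intros Hno.
  assert (ND : NoDup (map g (seq 0 (S m)))).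
  { apply NoDup_map_NoDup_ForallPairs; [|apply seq_NoDup].
    intros a b Ha Hb Eab. apply in_seq in Ha, Hb.
    destruct (Nat.lt_total a b) as [lt|[eq|gt]]; auto; exfalso; apply Hno.
    - exists a, b. split; [lia|auto].
    - exists b, a. split; [lia|auto]. }
  assert (Inc : incl (map g (seq 0 (S m))) s).
  { intros x Hx. apply in_map_iff in Hx. destruct Hx as [i [<- Hi]].
    apply in_seq in Hi. apply Hin. lia. }
  pose proof (NoDup_incl_length ND Inc) as HL. rewrite length_map, length_seq in HL. lia.
Qed.

Lemma ex_minimal (P : nat -> Prop) :
  (exists n, P n) -> exists n, P n /\ forall m, (m < n)%nat -> ~ P m.
Proof.
  intros [n Hn]. induction n as [n IH] using (well_founded_induction lt_wf).
  destruct (classic (exists m, (m < n)%nat /\ P m)) as [[m [Hm Pm]]|No].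
  - exact (IH m Hm Pm).
  - exists n. split; auto. intros m Hm Pm. apply No. eauto.
Qed.

Lemma factor_nth eps k n t :
  (t < n)%nat -> nth t (factor eps k n) H = eps (k + Z.of_nat t)%Z.
Proof.
  intros Ht. unfold factor.
  rewrite nth_indep with (d' := (fun i => eps (k + Z.of_nat i)%Z) 0%nat)
    by (rewrite length_map, length_seq; auto).
  rewrite (map_nth (fun i => eps (k + Z.of_nat i)%Z)), seq_nth by auto.
  reflexivity.
Qed.

Lemma factor_eq_iff eps k k' n :
  factor eps k n = factor eps k' n <->
  forall t, (t < n)%nat -> eps (k + Z.of_nat t)%Z = eps (k' + Z.of_nat t)%Z.
Proof.
  split.
  - intros E t Ht. rewrite <- (factor_nth eps k n t Ht), <- (factor_nth eps k' n t Ht), E.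
    reflexivity.
  - intros E. unfold factor. apply map_ext_in. intros t Ht. apply in_seq in Ht. apply E. lia.
Qed.

Lemma factor_snoc eps k n : factor eps k (S n) = factor eps k n ++ [eps (k + Z.of_nat n)%Z].
Proof. unfold factor. rewrite seq_S, map_app. reflexivity. Qed.

Lemma factor_eq_head eps x y k :
  (1 <= k)%nat -> factor eps x k = factor eps y k -> eps x = eps y.
Proof.
  intros Hk E. rewrite factor_eq_iff in E. specialize (E 0%nat Hk).
  rewrite !Z.add_0_r in E. exact E.
Qed.

Lemma factor_eq_succ eps k x y :
  factor eps x k = factor eps y k -> eps (x + Z.of_nat k)%Z = eps (y + Z.of_nat k)%Z ->
  factor eps (x + 1) k = factor eps (y + 1) k.
Proof.
  intros E1 E2. apply factor_eq_iff. intros t Ht.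
  replace (x + 1 + Z.of_nat t)%Z with (x + Z.of_nat (S t))%Z by lia.
  replace (y + 1 + Z.of_nat t)%Z with (y + Z.of_nat (S t))%Z by lia.
  destruct (Nat.eq_dec (S t) k) as [<-|ne]; auto.
  rewrite factor_eq_iff in E1. apply E1. lia.
Qed.

Lemma factor_eq_forward eps k a b (m : nat) :
  factor eps a k = factor eps b k ->
  (forall n : nat, (n < m)%nat ->
     factor eps (a + Z.of_nat n) k = factor eps (b + Z.of_nat n) k ->
     eps (a + Z.of_nat n + Z.of_nat k)%Z = eps (b + Z.of_nat n + Z.of_nat k)%Z) ->
  factor eps (a + Z.of_nat m) k = factor eps (b + Z.of_nat m) k.
Proof.
  intros E0 Next. induction m as [|m IH].
  - rewrite !Z.add_0_r. exact E0.
  - rewrite Nat2Z.inj_succ, <- !Z.add_1_r, !Z.add_assoc.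
    assert (Em : factor eps (a + Z.of_nat m) k = factor eps (b + Z.of_nat m) k)
      by (apply IH; auto).
    apply factor_eq_succ; auto.
Qed.

Lemma factor_eq_tail eps x y k :
  factor eps x (S k) = factor eps y (S k) -> factor eps (x + 1) k = factor eps (y + 1) k.
Proof.
  rewrite !factor_eq_iff. intros E t Ht.
  replace (x + 1 + Z.of_nat t)%Z with (x + Z.of_nat (S t))%Z by lia.
  replace (y + 1 + Z.of_nat t)%Z with (y + Z.of_nat (S t))%Z by lia.
  apply E. lia.
Qed.
(** * Sturmian sequences are balanced *)

Definition right_special_at (eps : bseq) (k : nat) (x : Z) : Prop :=
  exists y, factor eps x k = factor eps y k /\
            eps (x + Z.of_nat k)%Z <> eps (y + Z.of_nat k)%Z.

Section RightSpecial.

Variable eps : bseq.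
Hypothesis Hcomp : complexity_n_plus_1 eps.

Definition right_ext (k : nat) (x : list letter) : letter :=
  if excluded_middle_informative (exists j, x ++ [H] = factor eps j (S k)) then H else V.

Lemma right_ext_spec k x :
  (exists j, x = factor eps j k) -> exists j', x ++ [right_ext k x] = factor eps j' (S k).
Proof.
  intros [j Hj]. unfold right_ext.
  destruct (excluded_middle_informative _) as [Y|N]; auto.
  exists j. rewrite factor_snoc, <- Hj. destruct (eps (j + Z.of_nat k)%Z) eqn:E; auto.
  exfalso. apply N. exists j. rewrite factor_snoc, <- Hj, E. reflexivity.
Qed.

(* The [k+1] factors [x ++ [right_ext k x]] and the two other extensions of two
   distinct right special factors would give [k+2] factors of length [k+1]. *)
Lemma right_special_unique k p q :
  right_special_at eps k p -> right_special_at eps k q -> factor eps p k = factor eps q k.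
Proof.
  intros [p' [Ep Dp]] [q' [Eq Dq]]. apply NNPP. intros Hne.
  set (u := factor eps p k) in *. set (w := factor eps q k) in *.
  destruct (Hcomp k) as [sk [NDk [Lk Ink]]]. destruct (Hcomp (S k)) as [sk1 [ND1 [L1 In1]]].
  assert (AllU : forall c, exists j, u ++ [c] = factor eps j (S k)).
  { intros c.
    destruct (letter_cases_neq _ _ c Dp) as [-> | ->]; [exists p | exists p'];
      rewrite factor_snoc; subst u; rewrite ?Ep; reflexivity. }
  assert (AllW : forall c, exists j, w ++ [c] = factor eps j (S k)).
  { intros c. destruct (letter_cases_neq _ _ c Dq) as [-> | ->]; [exists q | exists q'];
      rewrite factor_snoc; subst w; rewrite ?Eq; reflexivity. }
  set (f := fun x => x ++ [right_ext k x]).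
  set (L := (u ++ [flip (right_ext k u)]) :: (w ++ [flip (right_ext k w)]) :: map f sk).
  assert (NDm : NoDup (map f sk)).
  { apply NoDup_map_NoDup_ForallPairs; auto. intros a b _ _ Eab.
    apply app_inj_tail in Eab. tauto. }
  assert (notin : forall x, ~ In (x ++ [flip (right_ext k x)]) (map f sk)).
  { intros x Hx. apply in_map_iff in Hx. destruct Hx as [y [Ey _]].
    apply app_inj_tail in Ey. destruct Ey as [-> Ee]. exact (flip_neq _ (eq_sym Ee)). }
  assert (ND : NoDup L).
  { constructor; [|constructor; auto].
    intros [E|E]; [|exact (notin u E)].
    apply app_inj_tail in E. destruct E as [E _]. exact (Hne (eq_sym E)). }
  assert (Inc : incl L sk1).
  { intros x Hx. apply In1. destruct Hx as [<-|[<-|Hx]]; [apply AllU|apply AllW|].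
    apply in_map_iff in Hx. destruct Hx as [y [<- Hy]]. apply Ink in Hy.
    exact (right_ext_spec k y Hy). }
  pose proof (NoDup_incl_length ND Inc) as HL. simpl in HL. rewrite length_map in HL. lia.
Qed.

(* Among [k+2] consecutive windows two agree; without right special positions
   the agreement would propagate forever and make [eps] eventually periodic. *)
Lemma right_special_recurrent k :
  ~ eventually_periodic eps -> (1 <= k)%nat ->
  forall K, exists p, (K <= p)%Z /\ right_special_at eps k p.
Proof.
  intros NP Hk K. apply NNPP. intros No.
  assert (Det : forall p y, (K <= p)%Z -> factor eps p k = factor eps y k ->
                  eps (p + Z.of_nat k)%Z = eps (y + Z.of_nat k)%Z).
  { intros p y Hp E. apply NNPP. intros D. apply No. exists p. split; auto. exists y. auto. }
  destruct (Hcomp k) as [sk [NDk [Lk Ink]]].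
  destruct (pigeonhole (fun i => factor eps (K + Z.of_nat i)%Z k) sk (S k) Lk)
    as [i [j [Hij Eij]]].
  { intros i _. apply Ink. eauto. }
  set (a := (K + Z.of_nat i)%Z) in *. set (b := (K + Z.of_nat j)%Z) in *.
  assert (W : forall n : nat, factor eps (a + Z.of_nat n) k = factor eps (b + Z.of_nat n) k).
  { intros n. apply factor_eq_forward; auto.
    intros m _ Em. symmetry. apply Det; [unfold b; lia|auto]. }
  apply NP. exists (b - a)%Z, a. split; [unfold a, b; lia|].
  intros n Hn. specialize (W (Z.to_nat (n - a))). apply factor_eq_head in W; auto.
  rewrite Z2Nat.id in W by lia.
  replace (a + (n - a))%Z with n in W by lia. rewrite W. f_equal. lia.
Qed.

End RightSpecial.

Definition counts_V (eps : bseq) (h : Z -> Z) : Prop :=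
  forall n, h (n + 1)%Z = (h n + vweight (eps n))%Z.

Definition weight (h : Z -> Z) (i : Z) (L : nat) : Z := (h (i + Z.of_nat L) - h i)%Z.

Definition balanced_at (h : Z -> Z) (L : nat) : Prop :=
  forall i j, (weight h i L - weight h j L <= 1)%Z.

Lemma weight_add h i (a b : nat) :
  weight h i (a + b) = (weight h i a + weight h (i + Z.of_nat a) b)%Z.
Proof.
  unfold weight. rewrite Nat2Z.inj_add, Z.add_assoc. lia.
Qed.

Lemma weight_diff_of_common_prefix h x y (d k : nat) :
  (1 <= d <= S k)%nat -> (forall L, (L <= k)%nat -> balanced_at h L) ->
  weight h x d = weight h y d -> (weight h x (S k) - weight h y (S k) <= 1)%Z.
Proof.
  intros Hd Bal E. replace (S k) with (d + (S k - d))%nat by lia. rewrite !weight_add.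
  pose proof (Bal (S k - d)%nat ltac:(lia) (x + Z.of_nat d)%Z (y + Z.of_nat d)%Z). lia.
Qed.

Section Weights.

Variables (eps : bseq) (h : Z -> Z).
Hypothesis Hh : counts_V eps h.

Lemma weight_succ x n : weight h x (S n) = (weight h x n + vweight (eps (x + Z.of_nat n)%Z))%Z.
Proof.
  unfold weight. rewrite Nat2Z.inj_succ, <- Z.add_1_r, Z.add_assoc, Hh. lia.
Qed.

Lemma weight_bound x n : (0 <= weight h x n <= Z.of_nat n)%Z.
Proof.
  induction n as [|n IH].
  - unfold weight. rewrite Z.add_0_r. lia.
  - rewrite weight_succ. pose proof (vweight_bound (eps (x + Z.of_nat n)%Z)). lia.
Qed.

Lemma weight_factor_eq x y n : factor eps x n = factor eps y n -> weight h x n = weight h y n.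
Proof.
  rewrite factor_eq_iff. induction n as [|n IH]; intros E.
  - unfold weight. rewrite !Z.add_0_r. lia.
  - rewrite !weight_succ, (E n), IH; [reflexivity| |lia]. intros t Ht. apply E. lia.
Qed.

Lemma weight_ends x m :
  weight h x (S (S m)) =
  (vweight (eps x) + weight h (x + 1) m + vweight (eps (x + Z.of_nat (S m))%Z))%Z.
Proof.
  rewrite weight_succ. unfold weight. rewrite Hh.
  replace (x + 1 + Z.of_nat m)%Z with (x + Z.of_nat (S m))%Z by lia. lia.
Qed.

Lemma weight_periodic_shift x (d k : nat) :
  (forall t : nat, (t < k)%nat -> eps (x + Z.of_nat t)%Z = eps (x + Z.of_nat d + Z.of_nat t)%Z) ->
  forall n : nat, (n <= k)%nat -> weight h (x + Z.of_nat n) d = weight h x d.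
Proof.
  intros Per n. induction n as [|n IH]; intros Hn.
  - rewrite Z.add_0_r. reflexivity.
  - unfold weight in *. rewrite Nat2Z.inj_succ, <- Z.add_1_r.
    replace (x + (Z.of_nat n + 1) + Z.of_nat d)%Z with (x + Z.of_nat n + Z.of_nat d + 1)%Z by lia.
    replace (x + (Z.of_nat n + 1))%Z with (x + Z.of_nat n + 1)%Z by lia.
    rewrite !Hh, (Per n) by lia.
    replace (x + Z.of_nat d + Z.of_nat n)%Z with (x + Z.of_nat n + Z.of_nat d)%Z by lia.
    specialize (IH ltac:(lia)). lia.
Qed.

End Weights.

Section SpecialFactorReturns.

Variable eps : bseq.
Hypothesis NP : ~ eventually_periodic eps.
Hypothesis Hcomp : complexity_n_plus_1 eps.
Variables (k : nat) (p : Z).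
Hypothesis Hk : (1 <= k)%nat.
Hypothesis Hp : right_special_at eps k p.

Let r := factor eps p k.

Lemma special_next_letter x y :
  factor eps x k = factor eps y k -> factor eps x k <> r ->
  eps (x + Z.of_nat k)%Z = eps (y + Z.of_nat k)%Z.
Proof.
  intros E Nr. apply NNPP. intros D. apply Nr. symmetry.
  apply (right_special_unique eps Hcomp); [exact Hp|]. exists y. auto.
Qed.

Lemma special_occurs_right K : exists x, (K <= x)%Z /\ factor eps x k = r.
Proof.
  destruct (right_special_recurrent eps Hcomp k NP Hk K) as [x [Hx Sx]].
  exists x. split; auto. symmetry. apply (right_special_unique eps Hcomp); auto.
Qed.

Lemma special_occurs_left q : exists x, (x <= q)%Z /\ factor eps x k = r.
Proof.
  destruct (Hcomp k) as [sk [_ [Lk Ink]]].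
  destruct (pigeonhole (fun i => factor eps (q - Z.of_nat (S k) + Z.of_nat i)%Z k) sk (S k) Lk)
    as [i [j [Hij Eij]]].
  { intros i _. apply Ink. eauto. }
  set (a := (q - Z.of_nat (S k) + Z.of_nat i)%Z) in *.
  set (b := (q - Z.of_nat (S k) + Z.of_nat j)%Z) in *.
  destruct (special_occurs_right b) as [x0 [Hx0 Ex0]].
  destruct (ex_minimal (fun n => factor eps (b + Z.of_nat n)%Z k = r)) as [n0 [Hn0 Mn0]].
  { exists (Z.to_nat (x0 - b)). rewrite Z2Nat.id by lia. replace (b + (x0 - b))%Z with x0 by lia. auto. }
  assert (W : factor eps (a + Z.of_nat n0) k = r).
  { rewrite <- Hn0. apply factor_eq_forward; auto. intros n Hn En.
    symmetry. apply special_next_letter; [symmetry; auto|]. apply (Mn0 n Hn). }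
  destruct (Z_le_gt_dec b (a + Z.of_nat n0)) as [Hge|Hlt].
  - exfalso. apply (Mn0 (Z.to_nat (a + Z.of_nat n0 - b))); [unfold a, b in *; lia|].
    rewrite Z2Nat.id by lia. replace (b + (a + Z.of_nat n0 - b))%Z with (a + Z.of_nat n0)%Z by lia.
    exact W.
  - exists (a + Z.of_nat n0)%Z. split; [unfold b in Hlt; lia|exact W].
Qed.

Definition no_occurrence_between (i0 i1 : Z) : Prop :=
  forall z, (i0 < z < i1)%Z -> factor eps z k <> r.

(* Equal windows inside a gap would propagate to an occurrence inside the gap. *)
Lemma gap_factors_distinct i0 i1 x y :
  factor eps i1 k = r -> no_occurrence_between i0 i1 ->
  (i0 <= x < y)%Z -> (y < i1)%Z -> factor eps x k <> factor eps y k.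
Proof.
  intros E1 Gap Hxy Hy Exy.
  assert (W : factor eps (x + Z.of_nat (Z.to_nat (i1 - y))) k = factor eps (y + Z.of_nat (Z.to_nat (i1 - y))) k).
  { apply factor_eq_forward; auto. intros n Hn En.
    symmetry. apply special_next_letter; [symmetry; auto|]. apply Gap. lia. }
  rewrite Z2Nat.id in W by lia. replace (y + (i1 - y))%Z with i1 in W by lia.
  apply (Gap (x + (i1 - y))%Z); [lia|congruence].
Qed.

Lemma gap_bound i0 i1 :
  factor eps i1 k = r -> no_occurrence_between i0 i1 -> (i0 < i1)%Z ->
  (i1 - i0 <= Z.of_nat (S k))%Z.
Proof.
  intros E1 Gap Hi. apply Z.nlt_ge. intros Hlt.
  destruct (Hcomp k) as [sk [_ [Lk Ink]]].
  destruct (pigeonhole (fun i => factor eps (i0 + Z.of_nat i)%Z k) sk (S k) Lk) as [i [j [Hij Eij]]].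
  { intros i _. apply Ink. eauto. }
  apply (gap_factors_distinct i0 i1 (i0 + Z.of_nat i) (i0 + Z.of_nat j)); auto; lia.
Qed.

Lemma surrounding_occurrences q :
  factor eps q k <> r ->
  exists i0 i1, (i0 < q < i1)%Z /\ factor eps i0 k = r /\ factor eps i1 k = r /\
                no_occurrence_between i0 i1.
Proof.
  intros Nq.
  destruct (special_occurs_left (q - 1)) as [x [Hx Ex]].
  destruct (ex_minimal (fun n => factor eps (q - 1 - Z.of_nat n)%Z k = r)) as [n0 [Hn0 Mn0]].
  { exists (Z.to_nat (q - 1 - x)). rewrite Z2Nat.id by lia. replace (q - 1 - (q - 1 - x))%Z with x by lia. auto. }
  destruct (special_occurs_right (q + 1)) as [x1 [Hx1 Ex1]].
  destruct (ex_minimal (fun n => factor eps (q + 1 + Z.of_nat n)%Z k = r)) as [n1 [Hn1 Mn1]].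
  { exists (Z.to_nat (x1 - q - 1)). rewrite Z2Nat.id by lia. replace (q + 1 + (x1 - q - 1))%Z with x1 by lia. auto. }
  exists (q - 1 - Z.of_nat n0)%Z, (q + 1 + Z.of_nat n1)%Z. repeat split; auto; try lia.
  intros y Hy E. destruct (Z_le_gt_dec y q) as [Hle|Hgt].
  - destruct (Z.eq_dec y q) as [->|ne]; [auto|].
    apply (Mn0 (Z.to_nat (q - 1 - y))); [lia|].
    rewrite Z2Nat.id by lia. replace (q - 1 - (q - 1 - y))%Z with y by lia. auto.
  - apply (Mn1 (Z.to_nat (y - q - 1))); [lia|].
    rewrite Z2Nat.id by lia. replace (q + 1 + (y - q - 1))%Z with y by lia. auto.
Qed.

Lemma shifted_special_head q :
  (forall t, (1 <= t < Z.of_nat k)%Z -> eps (q + t)%Z = eps (p + t)%Z) ->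
  factor eps (q + 1) k = r -> eps (q + Z.of_nat k)%Z = eps p.
Proof.
  intros Tq E. unfold r in E. rewrite factor_eq_iff in E.
  assert (Const : forall t, (t < k)%nat -> eps (q + 1 + Z.of_nat t)%Z = eps p).
  { induction t as [|t IHt]; intros Ht.
    - rewrite E, !Z.add_0_r by lia. reflexivity.
    - rewrite <- (IHt ltac:(lia)), E by lia.
      replace (q + 1 + Z.of_nat t)%Z with (q + (Z.of_nat t + 1))%Z by lia.
      rewrite Tq by lia. f_equal. lia. }
  specialize (Const (k - 1)%nat ltac:(lia)).
  replace (q + 1 + Z.of_nat (k - 1))%Z with (q + Z.of_nat k)%Z in Const by lia. exact Const.
Qed.

Variable h : Z -> Z.
Hypothesis Hh : counts_V eps h.

(* Let [i0 < q < i1] be the occurrences of the special factor around [q].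
   The windows of length [k+1] at [i0] and [q] have the same interior and
   opposite end letters, so their weights differ by 2; but [i1 - i0 <= k+1],
   and the period [i1 - i0] gives their prefixes of that length equal
   weight, so balance below length [k+1] bounds the difference by 1. *)
Lemma special_tail_flanked_absurd q :
  (forall L, (L <= k)%nat -> balanced_at h L) ->
  eps q <> eps p -> (forall t, (1 <= t < Z.of_nat k)%Z -> eps (q + t)%Z = eps (p + t)%Z) ->
  eps (q + Z.of_nat k)%Z = eps q -> False.
Proof.
  intros Bal Nq Tq Lq.
  assert (Q0 : factor eps q k <> r) by (intros E; exact (Nq (factor_eq_head eps q p k Hk E))).
  assert (Q1 : factor eps (q + 1) k <> r).
  { intros E. apply Nq. rewrite <- Lq. exact (shifted_special_head q Tq E). }
  destruct (surrounding_occurrences q Q0) as [i0 [i1 [Hq [E0 [E1 Gap]]]]].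
  assert (Hq1 : (q + 1 < i1)%Z) by (destruct (Z.eq_dec (q + 1) i1) as [<-|]; [contradiction|lia]).
  assert (Len := gap_bound i0 i1 E1 Gap ltac:(lia)).
  assert (Inner : forall t : nat, (t < k - 1)%nat ->
            eps (i0 + 1 + Z.of_nat t)%Z = eps (q + 1 + Z.of_nat t)%Z).
  { intros t Ht. unfold r in E0. rewrite factor_eq_iff in E0.
    replace (i0 + 1 + Z.of_nat t)%Z with (i0 + Z.of_nat (S t))%Z by lia.
    rewrite E0 by lia. replace (q + 1 + Z.of_nat t)%Z with (q + (Z.of_nat t + 1))%Z by lia.
    rewrite Tq by lia. f_equal. lia. }
  assert (Ends : eps (i0 + Z.of_nat k)%Z <> eps (q + Z.of_nat k)%Z).
  { intros E. apply (gap_factors_distinct i0 i1 (i0 + 1) (q + 1) E1 Gap); try lia.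
    apply factor_eq_iff. intros t Ht. destruct (Nat.eq_dec (S t) k) as [e|ne].
    - replace (i0 + 1 + Z.of_nat t)%Z with (i0 + Z.of_nat k)%Z by lia.
      replace (q + 1 + Z.of_nat t)%Z with (q + Z.of_nat k)%Z by lia. exact E.
    - apply Inner. lia. }
  assert (F0 : eps i0 = eps p) by exact (factor_eq_head eps i0 p k Hk E0).
  assert (Lk0 : eps (i0 + Z.of_nat k)%Z = eps i0).
  { apply (letter_eq_of_neq _ _ (eps q)); [congruence|]. rewrite F0. auto. }
  assert (Diff : (weight h i0 (S k) - weight h q (S k) = 2 * (vweight (eps i0) - vweight (eps q)))%Z).
  { replace (S k) with (S (S (k - 1))) by lia. rewrite !(weight_ends eps h Hh).
    rewrite (weight_factor_eq eps h Hh (i0 + 1) (q + 1)) by (apply factor_eq_iff; exact Inner).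
    replace (Z.of_nat (S (k - 1))) with (Z.of_nat k) by lia. rewrite Lk0, Lq. lia. }
  set (d := Z.to_nat (i1 - i0)).
  assert (Per : weight h q d = weight h i0 d).
  { replace q with (i0 + Z.of_nat (Z.to_nat (q - i0)))%Z by lia.
    apply (weight_periodic_shift eps h Hh i0 d k); [|lia].
    intros t Ht. unfold d. rewrite Z2Nat.id by lia. replace (i0 + (i1 - i0))%Z with i1 by lia.
    rewrite <- E1 in E0. rewrite factor_eq_iff in E0. auto. }
  pose proof (weight_diff_of_common_prefix h q i0 d k ltac:(unfold d; lia) Bal Per).
  pose proof (weight_diff_of_common_prefix h i0 q d k ltac:(unfold d; lia) Bal (eq_sym Per)).
  rewrite F0 in Diff. destruct (eps p), (eps q); cbn [vweight] in Diff; try congruence; lia.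
Qed.

End SpecialFactorReturns.

Lemma unbalanced_minimal_shape eps h (Hh : counts_V eps h) k i j :
  (forall L, (L <= S k)%nat -> balanced_at h L) ->
  (weight h i (S (S k)) - weight h j (S (S k)) >= 2)%Z ->
  eps i = V /\ eps j = H /\
  (forall t : nat, (1 <= t <= k)%nat -> eps (i + Z.of_nat t)%Z = eps (j + Z.of_nat t)%Z) /\
  eps (i + Z.of_nat (S k))%Z = V /\ eps (j + Z.of_nat (S k))%Z = H.
Proof.
  intros Bal Hgt.
  set (d := fun t : nat => (weight h i t - weight h j t)%Z).
  assert (d_one : forall t, (1 <= t <= S k)%nat -> d t = 1%Z).
  { intros t Ht.
    pose proof (Bal t ltac:(lia) i j) as B1.
    pose proof (Bal (S (S k) - t)%nat ltac:(lia) (i + Z.of_nat t)%Z (j + Z.of_nat t)%Z) as B2.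
    replace (S (S k)) with (t + (S (S k) - t))%nat in Hgt by lia.
    rewrite !weight_add in Hgt. unfold d. lia. }
  assert (d_step : forall t, (d (S t) - d t = vweight (eps (i + Z.of_nat t)%Z) - vweight (eps (j + Z.of_nat t)%Z))%Z).
  { intros t. unfold d. rewrite !(weight_succ eps h Hh). lia. }
  assert (d_zero : d 0%nat = 0%Z) by (unfold d, weight; simpl Z.of_nat; rewrite !Z.add_0_r; lia).
  assert (End : (d (S (S k)) - d (S k) >= 1)%Z) by (rewrite (d_one (S k)) by lia; unfold d; lia).
  pose proof (d_step 0%nat) as S0. rewrite d_zero, d_one in S0 by lia.
  rewrite d_step in End. rewrite !Z.add_0_r in S0.
  pose proof (vweight_bound (eps i)). pose proof (vweight_bound (eps j)).
  pose proof (vweight_bound (eps (i + Z.of_nat (S k))%Z)).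
  pose proof (vweight_bound (eps (j + Z.of_nat (S k))%Z)).
  repeat split.
  - apply vweight_inj. cbn [vweight]. lia.
  - apply vweight_inj. cbn [vweight]. lia.
  - intros t Ht. apply vweight_inj. pose proof (d_step t) as St.
    rewrite !d_one in St by lia. lia.
  - apply vweight_inj. cbn [vweight]. lia.
  - apply vweight_inj. cbn [vweight]. lia.
Qed.

(* The right special factor of length [k+1] ends like [i u V] and [j u H]:
   by uniqueness at length [k], its last [k] letters are [u]. *)
Lemma right_special_tail eps (Hcomp : complexity_n_plus_1 eps) k p i j :
  right_special_at eps (S k) p ->
  (forall t : nat, (1 <= t <= k)%nat -> eps (i + Z.of_nat t)%Z = eps (j + Z.of_nat t)%Z) ->
  eps (i + Z.of_nat (S k))%Z <> eps (j + Z.of_nat (S k))%Z ->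
  forall t, (1 <= t < Z.of_nat (S k))%Z -> eps (p + t)%Z = eps (i + t)%Z.
Proof.
  intros Hp Emid Eend.
  assert (Tail : factor eps (p + 1) k = factor eps (i + 1) k).
  { apply (right_special_unique eps Hcomp).
    - destruct Hp as [p' [Ep Dp]]. exists (p' + 1)%Z. split; [apply factor_eq_tail; auto|].
      replace (p + 1 + Z.of_nat k)%Z with (p + Z.of_nat (S k))%Z by lia.
      replace (p' + 1 + Z.of_nat k)%Z with (p' + Z.of_nat (S k))%Z by lia. exact Dp.
    - exists (j + 1)%Z. split.
      + apply factor_eq_iff. intros t Ht.
        replace (i + 1 + Z.of_nat t)%Z with (i + Z.of_nat (S t))%Z by lia.
        replace (j + 1 + Z.of_nat t)%Z with (j + Z.of_nat (S t))%Z by lia.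
        apply Emid. lia.
      + replace (i + 1 + Z.of_nat k)%Z with (i + Z.of_nat (S k))%Z by lia.
        replace (j + 1 + Z.of_nat k)%Z with (j + Z.of_nat (S k))%Z by lia. exact Eend. }
  rewrite factor_eq_iff in Tail. intros t Ht.
  specialize (Tail (Z.to_nat (t - 1)) ltac:(lia)). rewrite Z2Nat.id in Tail by lia.
  replace (p + 1 + (t - 1))%Z with (p + t)%Z in Tail by lia.
  replace (i + 1 + (t - 1))%Z with (i + t)%Z in Tail by lia. exact Tail.
Qed.

Theorem sturmian_balanced eps h (Hh : counts_V eps h) :
  ~ eventually_periodic eps -> complexity_n_plus_1 eps -> forall L, balanced_at h L.
Proof.
  intros NP Hcomp L. induction L as [L IH] using (well_founded_induction lt_wf).
  intros i j. apply Z.nlt_ge. intros Hgt.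
  destruct L as [|[|k]].
  - unfold weight in Hgt. simpl Z.of_nat in Hgt. rewrite !Z.add_0_r in Hgt. lia.
  - pose proof (weight_bound eps h Hh i 1). pose proof (weight_bound eps h Hh j 1). lia.
  - assert (Bal : forall L, (L <= S k)%nat -> balanced_at h L) by (intros; apply IH; lia).
    destruct (unbalanced_minimal_shape eps h Hh k i j Bal ltac:(lia))
      as [Ei [Ej [Emid [Ei' Ej']]]].
    destruct (right_special_recurrent eps Hcomp (S k) NP ltac:(lia) 0%Z) as [p [_ Hp]].
    pose proof (right_special_tail eps Hcomp k p i j Hp Emid ltac:(rewrite Ei', Ej'; discriminate))
      as Tail.
    destruct (eps p) eqn:Epp.
    + apply (special_tail_flanked_absurd eps NP Hcomp (S k) p ltac:(lia) Hp h Hh i Bal).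
      * rewrite Ei, Epp. discriminate.
      * intros t Ht. symmetry. auto.
      * rewrite Ei, Ei'. reflexivity.
    + apply (special_tail_flanked_absurd eps NP Hcomp (S k) p ltac:(lia) Hp h Hh j Bal).
      * rewrite Ej, Epp. discriminate.
      * intros t Ht. rewrite Tail by auto.
        replace t with (Z.of_nat (Z.to_nat t)) by lia. symmetry. apply Emid. lia.
      * rewrite Ej, Ej'. reflexivity.
Qed.

(** * The slope of a balanced sequence *)

Open Scope R_scope.

Lemma Rabs_le_between x b : Rabs x <= b -> - b <= x <= b.
Proof. unfold Rabs. destruct (Rcase_abs x); intros; lra. Qed.

Lemma Rdiv_le_l a b c : 0 < c -> a <= b * c -> a / c <= b.
Proof.
  intros Hc Hab. unfold Rdiv. apply Rmult_le_reg_r with c; auto.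
  rewrite Rmult_assoc, Rinv_l by lra. lra.
Qed.

Lemma Rdiv_le_r a b c : 0 < c -> a * c <= b -> a <= b / c.
Proof.
  intros Hc Hab. unfold Rdiv. apply Rmult_le_reg_r with c; auto.
  rewrite Rmult_assoc, Rinv_l by lra. lra.
Qed.

Definition slope_of (h : Z -> Z) (a : R) : Prop :=
  forall (L : nat) i, (1 <= L)%nat -> IZR (weight h i L) - 1 <= INR L * a <= IZR (weight h i L) + 1.

Section Slope.

Variable h : Z -> Z.
Hypothesis Bal : forall L, balanced_at h L.

Lemma weight_blocks (a b : nat) i x :
  (Z.of_nat b * (weight h x a - 1) <= weight h i (a * b) <= Z.of_nat b * (weight h x a + 1))%Z.
Proof.
  revert i. induction b as [|b IHb]; intros i.
  - rewrite Nat.mul_0_r. unfold weight. simpl Z.of_nat. rewrite Z.add_0_r. lia.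
  - rewrite Nat.mul_succ_r, weight_add. specialize (IHb i).
    pose proof (Bal a x (i + Z.of_nat (a * b))%Z). pose proof (Bal a (i + Z.of_nat (a * b))%Z x).
    rewrite Nat2Z.inj_succ. lia.
Qed.

Lemma weight_cross (L L' : nat) i i' :
  (Z.of_nat L' * (weight h i L - 1) <= Z.of_nat L * (weight h i' L' + 1))%Z.
Proof.
  pose proof (weight_blocks L L' 0%Z i) as [X _].
  pose proof (weight_blocks L' L 0%Z i') as [_ Y].
  rewrite Nat.mul_comm in Y. lia.
Qed.

(* The slope is the supremum of the lower estimates [(weight h i L - 1) / L]. *)
Lemma slope_exists : { a : R | slope_of h a }.
Proof.
  set (lower := fun x => exists (L : nat) i, (1 <= L)%nat /\ x = (IZR (weight h i L) - 1) / INR L).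
  destruct (completeness lower) as [a [Ub Lub]].
  - exists (IZR (weight h 0 1) + 1). intros x [L [i [HL ->]]].
    pose proof (weight_cross L 1 i 0%Z) as X. rewrite Z.mul_1_l in X.
    apply Rdiv_le_l; [apply lt_0_INR; lia|].
    rewrite INR_IZR_INZ, <- minus_IZR, <- plus_IZR, <- mult_IZR. apply IZR_le. nia.
  - exists ((IZR (weight h 0 1) - 1) / INR 1), 1%nat, 0%Z. auto.
  - exists a. intros L i HL. assert (HL0 : 0 < INR L) by (apply lt_0_INR; lia). split.
    + assert (Hx : lower ((IZR (weight h i L) - 1) / INR L)) by (exists L, i; auto).
      specialize (Ub _ Hx). apply Rmult_le_reg_r with (/ INR L); [apply Rinv_0_lt_compat; lra|].
      rewrite (Rmult_comm (INR L)), Rmult_assoc, Rinv_r by lra. lra.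
    + assert (UB : is_upper_bound lower ((IZR (weight h i L) + 1) / INR L)).
      { intros x [L' [i' [HL' ->]]].
        assert (HL0' : 0 < INR L') by (apply lt_0_INR; lia).
        pose proof (weight_cross L' L i' i) as X.
        apply IZR_le in X. rewrite !mult_IZR, minus_IZR, plus_IZR, <- !INR_IZR_INZ in X.
        apply Rdiv_le_l; auto. unfold Rdiv. rewrite Rmult_assoc, (Rmult_comm (/ INR L)), <- Rmult_assoc.
        apply Rdiv_le_r; auto. lra. }
      specialize (Lub _ UB). apply Rmult_le_reg_r with (/ INR L); [apply Rinv_0_lt_compat; lra|].
      rewrite (Rmult_comm (INR L)), Rmult_assoc, Rinv_r by lra. lra.
Qed.

End Slope.

Lemma increasing_enumeration (P : Z -> Prop) :
  (forall K, exists t, (K <= t)%Z /\ P t) ->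
  exists ts : nat -> Z, (forall n, P (ts n)) /\ (forall n m, (n < m)%nat -> (ts n < ts m)%Z).
Proof.
  intros Inf.
  set (nxt := fun K => proj1_sig (constructive_indefinite_description _ (Inf K))).
  assert (Nxt : forall K, (K <= nxt K)%Z /\ P (nxt K)).
  { intros K. unfold nxt. destruct (constructive_indefinite_description _ (Inf K)); auto. }
  exists (fix ts (n : nat) : Z := match n with O => nxt 0%Z | S n => nxt (ts n + 1)%Z end).
  split.
  - intros [|n]; apply Nxt.
  - intros n m Hnm. induction Hnm as [|m _ IH]; [|apply (Z.lt_le_trans _ _ _ IH)];
      match goal with |- context [nxt (?t + 1)%Z] => pose proof (proj1 (Nxt (t + 1)%Z)) end; lia.
Qed.

Lemma same_residue_pair (ts : nat -> Z) q :
  (0 < q)%Z -> (forall n m, (n < m)%nat -> (ts n < ts m)%Z) ->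
  exists n1 n2 c, (n1 < n2)%nat /\ (1 <= c)%Z /\ ts n2 = (ts n1 + c * q)%Z.
Proof.
  intros Hq Inc.
  destruct (pigeonhole (fun n => Z.to_nat (ts n mod q)) (seq 0 (Z.to_nat q)) (Z.to_nat q) (length_seq _ _))
    as [n1 [n2 [Hn Er]]].
  { intros i _. apply in_seq. pose proof (Z.mod_pos_bound (ts i) q Hq). lia. }
  pose proof (Inc n1 n2 ltac:(lia)).
  pose proof (Z.mod_pos_bound (ts n1) q Hq). pose proof (Z.mod_pos_bound (ts n2) q Hq).
  pose proof (Z.div_mod (ts n1) q ltac:(lia)). pose proof (Z.div_mod (ts n2) q ltac:(lia)).
  exists n1, n2, (ts n2 / q - ts n1 / q)%Z. split; [lia|]. split; [|nia].
  apply Z.nlt_ge. intros Hc. nia.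
Qed.

Section RationalSlope.

Variables (h : Z -> Z) (p : Z) (Q : nat).
Hypothesis Bal : forall L, balanced_at h L.
Hypothesis Blocks : forall (n : nat) i, (1 <= n)%nat ->
  (Z.of_nat n * p - 1 <= weight h i (n * Q) <= Z.of_nat n * p + 1)%Z.

Let excess x := (weight h x Q - p)%Z.

Lemma excess_bound x : (-1 <= excess x <= 1)%Z.
Proof. specialize (Blocks 1%nat x (le_n _)). rewrite Nat.mul_1_l in Blocks. unfold excess. lia. Qed.

Lemma excess_same_sign x1 x : excess x1 <> 0%Z -> (excess x1 * excess x >= 0)%Z.
Proof.
  intros Nz. pose proof (excess_bound x1). pose proof (excess_bound x).
  pose proof (Bal Q x1 x). pose proof (Bal Q x x1). unfold excess in *.
  assert (E : (weight h x1 Q - p = 1 \/ weight h x1 Q - p = -1)%Z) by lia.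
  destruct E as [E|E]; rewrite E; lia.
Qed.

Lemma excess_sum_sign x1 n x :
  excess x1 <> 0%Z -> (excess x1 * (weight h x (n * Q) - Z.of_nat n * p) >= 0)%Z.
Proof.
  intros Nz. revert x. induction n as [|n IHn]; intros x.
  - unfold weight. simpl. rewrite Z.add_0_r. lia.
  - replace (S n * Q)%nat with (Q + n * Q)%nat by lia. rewrite weight_add, Nat2Z.inj_succ.
    specialize (IHn (x + Z.of_nat Q)%Z). pose proof (excess_same_sign x1 x Nz).
    unfold excess in *. nia.
Qed.

(* Between two exceptional blocks [c] apart, the [c + 1] blocks would add up
   to an excess of at least 2. *)
Lemma excess_isolated x1 (c : nat) :
  (1 <= c)%nat -> excess x1 <> 0%Z -> excess (x1 + Z.of_nat (c * Q)) <> 0%Z -> False.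
Proof.
  intros Hc N1 N2. set (x2 := (x1 + Z.of_nat (c * Q))%Z) in *.
  pose proof (excess_same_sign x1 x2 N1). pose proof (excess_bound x1). pose proof (excess_bound x2).
  pose proof (excess_sum_sign x1 (c - 1) (x1 + Z.of_nat Q)%Z N1) as Mid.
  pose proof (Blocks (S c) x1 ltac:(lia)) as Tot.
  replace (S c * Q)%nat with (Q + ((c - 1) * Q + Q))%nat in Tot by nia.
  rewrite !weight_add in Tot.
  replace (x1 + Z.of_nat Q + Z.of_nat ((c - 1) * Q))%Z with x2 in Tot
    by (unfold x2; rewrite <- Z.add_assoc, <- Nat2Z.inj_add; do 2 f_equal; nia).
  rewrite Nat2Z.inj_succ in Tot. rewrite Nat2Z.inj_sub in Mid by lia. unfold excess in *.
  assert (E : (weight h x1 Q - p = 1 \/ weight h x1 Q - p = -1)%Z) by lia.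
  destruct E as [E|E]; rewrite E in *; lia.
Qed.

End RationalSlope.

(* A rational slope [p/q] makes every block of length [q] have weight [p]
   except at positions of a single sign, at most one per residue class mod [q];
   beyond them the sequence is periodic of period [q]. *)
Lemma slope_irrational eps h (Hh : counts_V eps h) a :
  ~ eventually_periodic eps -> (forall L, balanced_at h L) -> slope_of h a -> irrational a.
Proof.
  intros NP Bal Ha.
  assert (Main : forall p q, (0 < q)%Z -> IZR q * a <> IZR p).
  { intros p q Hq Eq. set (Q := Z.to_nat q).
    assert (Blocks : forall (n : nat) i, (1 <= n)%nat ->
               (Z.of_nat n * p - 1 <= weight h i (n * Q) <= Z.of_nat n * p + 1)%Z).
    { intros n i Hn. specialize (Ha (n * Q)%nat i ltac:(unfold Q; nia)).
      rewrite mult_INR, (INR_IZR_INZ Q) in Ha. unfold Q in Ha.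
      rewrite Z2Nat.id, Rmult_assoc, Eq in Ha by lia.
      rewrite INR_IZR_INZ, <- mult_IZR, <- minus_IZR, <- plus_IZR in Ha.
      destruct Ha as [A B]. apply le_IZR in A, B. fold Q in A, B. lia. }
    assert (Inf : forall K, exists t, (K <= t)%Z /\ (weight h t Q - p <> 0)%Z).
    { intros K. apply NNPP. intros No. apply NP. exists q, K. split; auto. intros n Hn.
      assert (Z0 : forall t, (K <= t)%Z -> (weight h t Q - p = 0)%Z).
      { intros t Ht. apply NNPP. intros Nz. apply No. eauto. }
      apply vweight_inj. pose proof (Z0 n Hn) as A1. pose proof (Z0 (n + 1)%Z ltac:(lia)) as A2.
      unfold weight, Q in A1, A2. rewrite Z2Nat.id in A1, A2 by lia.
      replace (n + 1 + q)%Z with ((n + q) + 1)%Z in A2 by lia. rewrite !Hh in A2. lia. }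
    destruct (increasing_enumeration _ Inf) as [ts [Tnz Tinc]].
    destruct (same_residue_pair ts q Hq Tinc) as [n1 [n2 [c [Hn [Hc Ec]]]]].
    apply (excess_isolated h p Q Bal Blocks (ts n1) (Z.to_nat c)); [lia|apply Tnz|].
    replace (ts n1 + Z.of_nat (Z.to_nat c * Q))%Z with (ts n2)
      by (rewrite Ec, Nat2Z.inj_mul; unfold Q; rewrite !Z2Nat.id by lia; lia).
    apply Tnz. }
  intros p q Hq Eq. destruct (Z.lt_trichotomy 0 q) as [pos|[e|neg]].
  - apply (Main p q pos). rewrite Eq. field. apply not_0_IZR. auto.
  - lia.
  - apply (Main (- p)%Z (- q)%Z ltac:(lia)). rewrite Eq, !opp_IZR. field. apply not_0_IZR. auto.
Qed.

Fixpoint vcount (eps : bseq) (k : Z) (m : nat) : Z :=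
  match m with
  | O => 0%Z
  | S m' => (vcount eps k m' + vweight (eps (k + Z.of_nat m')%Z))%Z
  end.

Lemma vcount_cons eps k m : vcount eps k (S m) = (vweight (eps k) + vcount eps (k + 1) m)%Z.
Proof.
  induction m as [|m IHm].
  - simpl. rewrite Z.add_0_r. lia.
  - change (vcount eps k (S (S m)))
      with (vcount eps k (S m) + vweight (eps (k + Z.of_nat (S m))%Z))%Z.
    rewrite IHm. cbn [vcount]. replace (k + 1 + Z.of_nat m)%Z with (k + Z.of_nat (S m))%Z by lia. lia.
Qed.

Definition vheight (eps : bseq) (n : Z) : Z :=
  if (0 <=? n)%Z then vcount eps 0 (Z.to_nat n) else (- vcount eps n (Z.to_nat (- n)))%Z.

Lemma vheight_counts_V eps : counts_V eps (vheight eps).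
Proof.
  intros n. unfold vheight. destruct (Z.leb_spec 0 n) as [Hn|Hn].
  - destruct (Z.leb_spec 0 (n + 1)) as [_|X]; [|lia].
    rewrite Z2Nat.inj_add, Nat.add_1_r by lia. simpl. rewrite Z2Nat.id by lia. reflexivity.
  - destruct (Z.leb_spec 0 (n + 1)) as [X|X].
    + assert (n = -1)%Z by lia. subst. simpl. lia.
    + replace (Z.to_nat (- n)) with (S (Z.to_nat (- (n + 1)))) by lia.
      rewrite vcount_cons. lia.
Qed.

Definition discrepancy (h : Z -> Z) (a : R) (n : Z) : R := IZR (h n) - a * IZR n.

Lemma discrepancy_step eps h a (Hh : counts_V eps h) n :
  discrepancy h a (n + 1) = discrepancy h a n + IZR (vweight (eps n)) - a.
Proof. unfold discrepancy. rewrite Hh, !plus_IZR. ring. Qed.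

Lemma discrepancy_bound h a : slope_of h a -> forall i j, Rabs (discrepancy h a j - discrepancy h a i) <= 1.
Proof.
  intros Ha.
  assert (K : forall i j, (i <= j)%Z -> Rabs (discrepancy h a j - discrepancy h a i) <= 1).
  { intros i j Hij. destruct (Z.eq_dec i j) as [->|ne].
    - rewrite Rminus_diag, Rabs_R0. lra.
    - specialize (Ha (Z.to_nat (j - i)) i ltac:(lia)). unfold weight in Ha.
      rewrite Z2Nat.id in Ha by lia. replace (i + (j - i))%Z with j in Ha by lia.
      rewrite INR_IZR_INZ, Z2Nat.id, !minus_IZR in Ha by lia.
      unfold discrepancy. apply Rabs_le. nra. }
  intros i j. destruct (Z_le_gt_dec i j); auto.
  rewrite Rabs_minus_sym. apply K. lia.
Qed.

Lemma archimedean_nonpos x : (forall n : nat, INR n * x <= 1) -> x <= 0.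
Proof.
  intros Hx. apply Rnot_lt_le. intros Hpos.
  destruct (archimed (1 / x)) as [Up _].
  assert (Hu : (0 < up (1 / x))%Z) by (apply lt_IZR; unfold Rdiv in Up; pose proof (Rinv_0_lt_compat x Hpos); lra).
  specialize (Hx (Z.to_nat (up (1 / x)))). rewrite INR_IZR_INZ, Z2Nat.id in Hx by lia.
  assert (1 / x * x = 1) by (field; lra).
  assert (IZR (up (1 / x)) * x > 1 / x * x) by (apply Rmult_gt_compat_r; lra). lra.
Qed.

Lemma slope_in_unit_interval eps h a (Hh : counts_V eps h) :
  slope_of h a -> irrational a -> 0 < a < 1.
Proof.
  intros Ha Irr.
  assert (Hn : forall n : nat, IZR (weight h 0 n) - 1 <= INR n * a <= IZR (weight h 0 n) + 1).
  { intros [|n]; [|apply Ha; lia]. unfold weight. simpl. rewrite Z.sub_diag. lra. }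
  assert (Lo : - a <= 0).
  { apply archimedean_nonpos. intros n. pose proof (weight_bound eps h Hh 0 n) as [B _].
    apply IZR_le in B. specialize (Hn n). lra. }
  assert (Hi : a - 1 <= 0).
  { apply archimedean_nonpos. intros n. pose proof (weight_bound eps h Hh 0 n) as [_ B].
    apply IZR_le in B. rewrite <- INR_IZR_INZ in B. specialize (Hn n). lra. }
  split; apply Rnot_le_lt; intros E.
  - apply (Irr 0%Z 1%Z ltac:(lia)). replace a with 0 by lra. field.
  - apply (Irr 1%Z 1%Z ltac:(lia)). replace a with 1 by lra. field.
Qed.

Lemma sturmian_slope eps :
  sturmian eps -> exists h a, counts_V eps h /\ 0 < a < 1 /\ irrational a /\
    (forall i j, Rabs (discrepancy h a j - discrepancy h a i) <= 1).
Proof.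
  intros [NP Hcomp]. pose proof (vheight_counts_V eps) as Hh.
  pose proof (sturmian_balanced eps _ Hh NP Hcomp) as Bal.
  destruct (slope_exists _ Bal) as [a Ha].
  pose proof (slope_irrational eps _ Hh a NP Bal Ha) as Irr.
  exists (vheight eps), a. repeat split; auto; try apply (slope_in_unit_interval eps _ a Hh Ha Irr).
  apply discrepancy_bound. exact Ha.
Qed.

(** * Symmetric sequences cut lines through Weierstrass points *)

Definition steps01 (f : Z -> Z) : Prop := forall n, (f (n + 1) = f n \/ f (n + 1) = f n + 1)%Z.

Lemma steps01_monotone f : steps01 f -> forall n m, (n <= m)%Z -> (f n <= f m)%Z.
Proof.
  intros Hf n m Hnm. replace m with (n + Z.of_nat (Z.to_nat (m - n)))%Z by lia.
  induction (Z.to_nat (m - n)) as [|k IH].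
  - rewrite Z.add_0_r. lia.
  - rewrite Nat2Z.inj_succ, <- Z.add_1_r, Z.add_assoc. destruct (Hf (n + Z.of_nat k)%Z); lia.
Qed.

Lemma steps01_crossing f : steps01 f ->
  forall m n1 n2, (f n1 <= m < f n2)%Z -> exists n, f n = m /\ f (n + 1)%Z = (m + 1)%Z.
Proof.
  intros Hf m n1 n2 Hm.
  assert (Hlt : (n1 < n2)%Z).
  { apply Z.nle_gt. intros Hle. pose proof (steps01_monotone f Hf n2 n1 Hle). lia. }
  replace n2 with (n1 + Z.of_nat (Z.to_nat (n2 - n1)))%Z in Hm by lia.
  revert Hm. generalize (Z.to_nat (n2 - n1)) as k. clear n2 Hlt.
  intros k. revert n1. induction k as [|k IH]; intros n1 Hm.
  - rewrite Z.add_0_r in Hm. lia.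
  - destruct (Z_le_gt_dec (f (n1 + 1)%Z) m) as [le|gt].
    + apply (IH (n1 + 1)%Z). rewrite Nat2Z.inj_succ in Hm.
      replace (n1 + 1 + Z.of_nat k)%Z with (n1 + Z.succ (Z.of_nat k))%Z by lia. lia.
    + exists n1. destruct (Hf n1); lia.
Qed.

Lemma unbounded_of_slope (f : Z -> Z) c e :
  0 < c -> (forall n, Rabs (IZR (f n) - c * IZR n - e) <= 1) ->
  forall m, exists n1 n2, (f n1 <= m < f n2)%Z.
Proof.
  intros Hc Hf m.
  set (r2 := (IZR m - e + 1) / c). destruct (archimed r2) as [A2 _].
  set (r1 := (e + 1 - IZR m) / c). destruct (archimed r1) as [A1 _].
  exists (- up r1)%Z, (up r2).
  pose proof (Rabs_le_between _ _ (Hf (- up r1)%Z)) as H1.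
  pose proof (Rabs_le_between _ _ (Hf (up r2))) as H2. rewrite opp_IZR in H1.
  assert (c * IZR (up r2) > c * r2) by (apply Rmult_lt_compat_l; lra).
  assert (c * r2 = IZR m - e + 1) by (unfold r2; field; lra).
  assert (c * IZR (up r1) > c * r1) by (apply Rmult_lt_compat_l; lra).
  assert (c * r1 = e + 1 - IZR m) by (unfold r1; field; lra).
  split; [apply Z.lt_le_incl|]; apply lt_IZR; lra.
Qed.

(* The line [y = b + A x] has the cutting sequence [eps] when the [n]-th letter
   is [H] exactly if the [n]-th crossing is a vertical line, crossed at
   [x = n - h n] (the number of earlier [H]), and [V] when it is the
   horizontal line [y = h n]. *)
Section LineCuttingSequence.

Variables (eps : bseq) (h : Z -> Z) (A b : R).
Hypothesis Hh : counts_V eps h.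
Hypothesis HA : 0 < A.
Hypothesis Order : forall n,
  (eps n = H -> A * IZR (n - h n) + b <= IZR (h n)) /\
  (eps n = V -> A * IZR (n - h n) + b >= IZR (h n)).
Hypothesis Hcols : forall m, exists n1 n2, (n1 - h n1 <= m < n2 - h n2)%Z.
Hypothesis Hrows : forall m, exists n1 n2, (h n1 <= m < h n2)%Z.

Let col n := (n - h n)%Z.

Definition crossing_time (n : Z) : R :=
  match eps n with H => IZR (col n) | V => (IZR (h n) - b) / A end.

Lemma col_step n : col (n + 1) = (col n + 1 - vweight (eps n))%Z.
Proof. unfold col. rewrite Hh. lia. Qed.

Lemma col_steps01 : steps01 col.
Proof. intros n. rewrite col_step. destruct (eps n); simpl; lia. Qed.

Lemma h_steps01 : steps01 h.
Proof. intros n. rewrite Hh. destruct (eps n); simpl; lia. Qed.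

Lemma crossing_time_mono n : crossing_time n <= crossing_time (n + 1).
Proof.
  unfold crossing_time. pose proof (col_step n) as E1. pose proof (Hh n) as E2.
  destruct (Order n) as [C1 C2].
  destruct (eps n) eqn:En; destruct (eps (n + 1)%Z) eqn:En1; simpl in E1, E2.
  - rewrite E1. apply IZR_le. lia.
  - rewrite E2, Z.add_0_r. apply Rdiv_le_r; auto. specialize (C1 eq_refl). unfold col. lra.
  - rewrite E1. replace (col n + 1 - 1)%Z with (col n) by lia.
    apply Rdiv_le_l; auto. specialize (C2 eq_refl). unfold col. lra.
  - rewrite E2, plus_IZR. unfold Rdiv.
    apply Rmult_le_compat_r; [left; apply Rinv_0_lt_compat; auto|lra].
Qed.

Lemma crossing_time_crosses n : crosses 0 b A (eps n) (crossing_time n).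
Proof.
  unfold crossing_time, crosses. destruct (eps n).
  - exists (col n). lra.
  - exists (h n). field. lra.
Qed.

Lemma crossing_time_unique l t :
  crosses 0 b A l t -> exists! n, crossing_time n = t /\ eps n = l.
Proof.
  destruct l; simpl; intros [m Hm].
  - destruct (Hcols m) as [n1 [n2 Hn]].
    destruct (steps01_crossing col col_steps01 m n1 n2 Hn) as [n [E1 E2]].
    assert (En : eps n = H).
    { pose proof (col_step n). destruct (eps n); simpl in *; auto. lia. }
    exists n. split.
    + unfold crossing_time. rewrite En, E1. split; [lra|auto].
    + intros n' [T' E']. unfold crossing_time in T'. rewrite E' in T'.
      assert (EA : col n' = m) by (apply eq_IZR; lra).
      pose proof (col_step n'). rewrite E' in *. simpl in *.
      destruct (Z.lt_trichotomy n n') as [lt|[eq|gt]]; auto.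
      * pose proof (steps01_monotone col col_steps01 (n + 1) n' ltac:(lia)). lia.
      * pose proof (steps01_monotone col col_steps01 (n' + 1) n ltac:(lia)). lia.
  - destruct (Hrows m) as [n1 [n2 Hn]].
    destruct (steps01_crossing h h_steps01 m n1 n2 Hn) as [n [E1 E2]].
    assert (En : eps n = V).
    { pose proof (Hh n). destruct (eps n); simpl in *; auto. lia. }
    assert (Et : t = (IZR m - b) / A) by (apply (Rmult_eq_reg_l A); [field_simplify|]; lra).
    exists n. split.
    + unfold crossing_time. rewrite En, E1. auto.
    + intros n' [T' E']. unfold crossing_time in T'. rewrite E', Et in T'.
      assert (ES : h n' = m).
      { apply eq_IZR. apply (Rmult_eq_reg_r (/ A)); [|apply Rinv_neq_0_compat; lra].
        unfold Rdiv in T'. lra. }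
      pose proof (Hh n'). rewrite E' in *. simpl in *.
      destruct (Z.lt_trichotomy n n') as [lt|[eq|gt]]; auto.
      * pose proof (steps01_monotone h h_steps01 (n + 1) n' ltac:(lia)). lia.
      * pose proof (steps01_monotone h h_steps01 (n' + 1) n ltac:(lia)). lia.
Qed.

Lemma line_cutting_sequence : cutting_sequence 0 b A eps.
Proof.
  exists crossing_time. split; [exact crossing_time_mono|].
  split; [exact crossing_time_crosses|exact crossing_time_unique].
Qed.

End LineCuttingSequence.

Section SymmetricConstruction.

Variables (eps : bseq) (h : Z -> Z) (a : R).
Hypothesis Hh : counts_V eps h.
Hypothesis Ha : 0 < a < 1.
Hypothesis Irr : irrational a.
Hypothesis Bound : forall i j, Rabs (discrepancy h a j - discrepancy h a i) <= 1.

Let F := discrepancy h a.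

(* Where the reflection [i -> R - i] maps [F] to [sg - F], the bound
   [|F j - F i| <= 1] puts [F] in [sg/2 - 1/2, sg/2 + 1/2]; at [n + 1], with
   [F (n + 1) = F n - a] after [H] and [F n + 1 - a] after [V], this separates
   the two letters by the threshold [sg/2 + a - 1/2]. *)
Lemma letters_from_reflection sg R :
  (forall i, F i + F (R - i) = sg \/ sg / 2 - 1 / 2 <= F i <= sg / 2 + 1 / 2) ->
  forall n, (eps n = H -> F n >= sg / 2 + a - 1 / 2) /\ (eps n = V -> F n <= sg / 2 + a - 1 / 2).
Proof.
  intros Refl n. pose proof (discrepancy_step eps h a Hh n) as E. fold F in E.
  pose proof (Rabs_le_between _ _ (Bound (R - (n + 1))%Z (n + 1)%Z)) as B. fold F in B.
  split; intros En; rewrite En in E; simpl in E;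
    [apply Rnot_lt_ge|apply Rnot_gt_le]; intros Hlt;
    destruct (Refl (n + 1)%Z); lra.
Qed.

Lemma slope_ratio_irrational : irrational (a / (1 - a)).
Proof.
  intros p q Hq E. apply not_0_IZR in Hq.
  assert (X : a * IZR q = (1 - a) * IZR p).
  { replace (IZR p) with (a / (1 - a) * IZR q) by (rewrite E; field; auto). field. lra. }
  destruct (Z.eq_dec (p + q) 0) as [e|ne].
  - assert (Eq : IZR q = - IZR p) by (rewrite <- opp_IZR; f_equal; lia).
    rewrite Eq in X. assert (IZR p = 0) by lra. apply Hq. lra.
  - apply (Irr p (p + q)%Z ne). rewrite plus_IZR.
    assert (IZR p + IZR q <> 0) by (rewrite <- plus_IZR; apply not_0_IZR; auto).
    apply (Rmult_eq_reg_r (IZR p + IZR q)); auto. field_simplify; auto. lra.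
Qed.

(* In the coordinates [x = n - h n], [y = h n] of the lattice path of [eps],
   the threshold [F n = c0] becomes the line [y = (c0 + a x) / (1 - a)]. *)
Lemma cutting_sequence_of_threshold c0 :
  (forall n, (eps n = H -> F n >= c0) /\ (eps n = V -> F n <= c0)) ->
  cutting_sequence 0 (c0 / (1 - a)) (a / (1 - a)) eps.
Proof.
  intros Th. assert (Ha1 : 0 < 1 - a) by lra.
  apply line_cutting_sequence with (h := h); auto.
  - apply Rdiv_lt_0_compat; lra.
  - intros n. destruct (Th n) as [F1 F2]. unfold F, discrepancy in F1, F2. rewrite minus_IZR.
    replace (a / (1 - a) * (IZR n - IZR (h n)) + c0 / (1 - a))
      with ((a * (IZR n - IZR (h n)) + c0) / (1 - a)) by (field; lra).
    split; intros En; [apply Rdiv_le_l|apply Rle_ge, Rdiv_le_r]; auto; [apply F1 in En|apply F2 in En]; lra.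
  - apply (unbounded_of_slope (fun n => (n - h n)%Z) (1 - a) (- IZR (h 0%Z))); auto. intros n.
    pose proof (Bound 0%Z n) as B. unfold discrepancy in B. rewrite Rmult_0_r, Rminus_0_r in B.
    rewrite minus_IZR, <- Rabs_Ropp.
    replace (- (IZR n - IZR (h n) - (1 - a) * IZR n - - IZR (h 0%Z)))
      with (IZR (h n) - a * IZR n - IZR (h 0%Z)) by ring. exact B.
  - apply (unbounded_of_slope h a (IZR (h 0%Z))); [lra|]. intros n.
    pose proof (Bound 0%Z n) as B. unfold discrepancy in B. rewrite Rmult_0_r, Rminus_0_r in B. exact B.
Qed.

Lemma reflection_cutting_sequence sg R :
  (forall i, F i + F (R - i) = sg \/ sg / 2 - 1 / 2 <= F i <= sg / 2 + 1 / 2) ->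
  uniformly_distributed (a / (1 - a)) /\
  cutting_sequence 0 ((sg / 2 + a - 1 / 2) / (1 - a)) (a / (1 - a)) eps.
Proof.
  intros Refl. split.
  - split; [apply Rdiv_lt_0_compat; lra|exact slope_ratio_irrational].
  - apply cutting_sequence_of_threshold, (letters_from_reflection sg R Refl).
Qed.

End SymmetricConstruction.

Section MirrorSymmetry.

Variables (eps : bseq) (h : Z -> Z) (c d : Z).
Hypothesis Hh : counts_V eps h.
Hypothesis Mirror : forall k : nat, eps (c + Z.of_nat k)%Z = eps (d - 1 - Z.of_nat k)%Z.

Lemma mirror_height k : (h (c + Z.of_nat k) + h (d - Z.of_nat k) = h c + h d)%Z.
Proof.
  induction k as [|k IH].
  - rewrite Z.add_0_r, Z.sub_0_r. lia.
  - rewrite Nat2Z.inj_succ, <- Z.add_1_r, Z.add_assoc, Hh, Mirror.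
    pose proof (Hh (d - 1 - Z.of_nat k)%Z) as E.
    replace (d - 1 - Z.of_nat k + 1)%Z with (d - Z.of_nat k)%Z in E by lia.
    replace (d - (Z.of_nat k + 1))%Z with (d - 1 - Z.of_nat k)%Z by lia. lia.
Qed.

Lemma mirror_discrepancy a i :
  (c <= i \/ i <= d)%Z ->
  discrepancy h a i + discrepancy h a (c + d - i) = discrepancy h a c + discrepancy h a d.
Proof.
  intros Hi.
  assert (E : (h i + h (c + d - i) = h c + h d)%Z).
  { destruct Hi as [Hi|Hi].
    - pose proof (mirror_height (Z.to_nat (i - c))) as M. rewrite Z2Nat.id in M by lia.
      replace (c + (i - c))%Z with i in M by lia. replace (d - (i - c))%Z with (c + d - i)%Z in M by lia. lia.
    - pose proof (mirror_height (Z.to_nat (d - i))) as M. rewrite Z2Nat.id in M by lia.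
      replace (d - (d - i))%Z with i in M by lia. replace (c + (d - i))%Z with (c + d - i)%Z in M by lia. lia. }
  apply (f_equal IZR) in E. rewrite !plus_IZR in E.
  unfold discrepancy. rewrite minus_IZR, plus_IZR. lra.
Qed.

End MirrorSymmetry.

Lemma even_symmetric_through_D eps :
  sturmian eps -> even_symmetric eps -> cut_seq_through (fun P => P = ptD) eps.
Proof.
  intros St [N HN]. destruct (sturmian_slope eps St) as [h [a [Hh [Ha [Irr Fb]]]]].
  assert (Mirror : forall k : nat, eps (N + Z.of_nat k)%Z = eps (N - 1 - Z.of_nat k)%Z).
  { intros k. rewrite HN by lia. f_equal. lia. }
  set (sg := 2 * discrepancy h a N).
  destruct (reflection_cutting_sequence eps h a Hh Ha Irr Fb sg (N + N)) as [UD CS].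
  { intros i. left. rewrite (mirror_discrepancy eps h N N Hh Mirror) by lia. unfold sg. ring. }
  exists 0, ((sg / 2 + a - 1 / 2) / (1 - a)), (a / (1 - a)). split; auto. split; auto.
  exists ptD. split; auto. unfold through, passes_through, ptD. simpl.
  exists (IZR (N - h N) - 1 / 2). split.
  - exists (N - h N - 1)%Z. rewrite !minus_IZR. lra.
  - exists (h N - 1)%Z. unfold sg, discrepancy. rewrite !minus_IZR. field. lra.
Qed.

Lemma odd_symmetric_through_BC eps :
  sturmian eps -> odd_symmetric eps -> cut_seq_through (fun P => P = ptB \/ P = ptC) eps.
Proof.
  intros St [N HN]. destruct (sturmian_slope eps St) as [h [a [Hh [Ha [Irr Fb]]]]].
  assert (Mirror : forall k : nat, eps (N + 1 + Z.of_nat k)%Z = eps (N - 1 - Z.of_nat k)%Z).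
  { intros k. rewrite <- Z.add_assoc, HN by lia. f_equal. lia. }
  set (sg := discrepancy h a (N + 1) + discrepancy h a N).
  destruct (reflection_cutting_sequence eps h a Hh Ha Irr Fb sg (N + 1 + N)) as [UD CS].
  { intros i. left. rewrite (mirror_discrepancy eps h (N + 1) N Hh Mirror) by lia. unfold sg. ring. }
  exists 0, ((sg / 2 + a - 1 / 2) / (1 - a)), (a / (1 - a)). split; auto. split; auto.
  unfold sg. rewrite (discrepancy_step eps h a Hh N).
  destruct (eps N); simpl.
  - exists ptC. split; auto. unfold through, passes_through, ptC. simpl.
    exists (IZR (N - h N)). split.
    + exists (N - h N)%Z. lra.
    + exists (h N - 1)%Z. unfold discrepancy. rewrite !minus_IZR. field. lra.
  - exists ptB. split; auto. unfold through, passes_through, ptB. simpl.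
    exists (IZR (N - h N) - 1 / 2). split.
    + exists (N - h N - 1)%Z. rewrite !minus_IZR. lra.
    + exists (h N). unfold discrepancy. rewrite !minus_IZR. field. lra.
Qed.

(* The mismatched central pair puts [F N] itself in the window, the only
   position where the reflection identity fails. *)
Lemma almost_symmetric_through_A eps :
  sturmian eps -> almost_symmetric eps -> cut_seq_through (fun P => P = ptA) eps.
Proof.
  intros St [N [HN Hne]]. destruct (sturmian_slope eps St) as [h [a [Hh [Ha [Irr Fb]]]]].
  assert (Mirror : forall k : nat, eps (N + 1 + Z.of_nat k)%Z = eps (N - 1 - 1 - Z.of_nat k)%Z).
  { intros k. rewrite <- Z.add_assoc, HN by lia. f_equal. lia. }
  set (F := discrepancy h a).
  set (sg := F (N + 1)%Z + F (N - 1)%Z).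
  pose proof (discrepancy_step eps h a Hh N) as FR1. pose proof (discrepancy_step eps h a Hh (N - 1)) as FR0.
  fold F in FR1, FR0. replace (N - 1 + 1)%Z with N in FR0 by lia.
  assert (Sum : IZR (vweight (eps N)) + IZR (vweight (eps (N - 1)%Z)) = 1).
  { rewrite <- plus_IZR. destruct (eps N), (eps (N - 1)%Z); simpl; congruence || reflexivity. }
  assert (C0 : sg / 2 + a - 1 / 2 = F (N - 1)%Z) by (unfold sg; lra).
  destruct (reflection_cutting_sequence eps h a Hh Ha Irr Fb sg (N + 1 + (N - 1))) as [UD CS].
  { intros i. destruct (Z.eq_dec i N) as [->|ne].
    - right. fold F. unfold sg. pose proof (vweight_bound (eps N)) as [B0 B1].
      apply IZR_le in B0, B1. lra.
    - left. unfold sg, F. rewrite (mirror_discrepancy eps h (N + 1) (N - 1) Hh Mirror) by lia. ring. }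
  exists 0, ((sg / 2 + a - 1 / 2) / (1 - a)), (a / (1 - a)). split; auto. split; auto.
  exists ptA. split; auto. unfold through, passes_through, ptA. simpl.
  exists (IZR ((N - 1) - h (N - 1)%Z)). split.
  - exists ((N - 1) - h (N - 1)%Z)%Z. lra.
  - exists (h (N - 1)%Z). rewrite C0. unfold F, discrepancy. rewrite !minus_IZR. field. lra.
Qed.

(** * Lines through Weierstrass points have symmetric cutting sequences *)

Definition enumerates (E : letter -> R -> Prop) (tau : Z -> R) (e : bseq) : Prop :=
  (forall n, tau n <= tau (n + 1)%Z) /\ (forall n, E (e n) (tau n)) /\
  (forall l t, E l t -> exists! n, tau n = t /\ e n = l).

Definition double_event (E : letter -> R -> Prop) (t : R) : Prop := E H t /\ E V t.

Section Enumerations.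

Variable E : letter -> R -> Prop.

Lemma enumerates_mono tau e : enumerates E tau e -> forall n m, (n <= m)%Z -> tau n <= tau m.
Proof.
  intros [M _] n m Hnm. replace m with (n + Z.of_nat (Z.to_nat (m - n)))%Z by lia.
  induction (Z.to_nat (m - n)) as [|k IH].
  - rewrite Z.add_0_r. lra.
  - rewrite Nat2Z.inj_succ, <- Z.add_1_r, Z.add_assoc. specialize (M (n + Z.of_nat k)%Z). lra.
Qed.

Lemma enumerates_inj tau e : enumerates E tau e -> forall n m, tau n = tau m -> e n = e m -> n = m.
Proof.
  intros [_ [Ev U]] n m T L. destruct (U (e n) (tau n) (Ev n)) as [x [_ Ux]].
  rewrite <- (Ux n), (Ux m) by auto. reflexivity.
Qed.

Lemma enumerates_lt tau e : enumerates E tau e -> forall n m, tau n < tau m -> (n < m)%Z.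
Proof.
  intros En n m T. apply Z.nle_gt. intros Hle. pose proof (enumerates_mono tau e En m n Hle). lra.
Qed.

Lemma enumerates_no_triple tau e :
  enumerates E tau e -> forall i, ~ (tau (i - 1)%Z = tau i /\ tau (i + 1)%Z = tau i).
Proof.
  intros En i [A B]. pose proof (enumerates_inj tau e En) as Inj.
  destruct (e (i - 1)%Z) eqn:E1, (e i) eqn:E2, (e (i + 1)%Z) eqn:E3;
  try (assert (i - 1 = i)%Z by (apply Inj; congruence); lia);
  try (assert (i + 1 = i)%Z by (apply Inj; congruence); lia);
  try (assert (i - 1 = i + 1)%Z by (apply Inj; congruence); lia).
Qed.

Lemma enumerates_repeat_iff tau e : enumerates E tau e -> forall i,
  (tau (i + 1)%Z = tau i \/ tau (i - 1)%Z = tau i) <-> double_event E (tau i).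
Proof.
  intros En i. pose proof En as [M [Ev U]]. split.
  - intros Hj. assert (exists j, j <> i /\ tau j = tau i) as [j [Hji Tj]].
    { destruct Hj; [exists (i + 1)%Z|exists (i - 1)%Z]; split; auto; lia. }
    assert (e j <> e i) by (intros Ee; apply Hji; apply (enumerates_inj tau e En); auto).
    pose proof (Ev i) as Ei. pose proof (Ev j) as Ej. rewrite Tj in Ej.
    unfold double_event. destruct (e i), (e j); try congruence; split; auto.
  - intros [DH DV].
    assert (exists j, tau j = tau i /\ e j <> e i) as [j [Tj Ej]].
    { destruct (e i) eqn:Ei; [destruct (U V (tau i) DV) as [j [[Tj Ej'] _]]
                             |destruct (U H (tau i) DH) as [j [[Tj Ej'] _]]];
        exists j; rewrite Ej'; split; auto; discriminate. }
    assert (j <> i) by (intros ->; auto).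
    destruct (Z_lt_le_dec i j) as [lt|le].
    + left. pose proof (enumerates_mono tau e En i (i + 1) ltac:(lia)).
      pose proof (enumerates_mono tau e En (i + 1) j ltac:(lia)). lra.
    + right. pose proof (enumerates_mono tau e En (i - 1) i ltac:(lia)).
      pose proof (enumerates_mono tau e En j (i - 1) ltac:(lia)). lra.
Qed.

Lemma enumerates_next_le tau1 e1 tau2 e2 i1 i2 :
  enumerates E tau1 e1 -> enumerates E tau2 e2 ->
  tau1 i1 < tau2 (i2 + 1)%Z -> tau1 (i1 + 1)%Z <= tau2 (i2 + 1)%Z.
Proof.
  intros E1 E2 Lt. pose proof E1 as [_ [_ U1]]. pose proof E2 as [_ [Ev2 _]].
  destruct (U1 _ _ (Ev2 (i2 + 1)%Z)) as [j [[Tj _] _]].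
  assert (Hj : (i1 < j)%Z) by (apply (enumerates_lt tau1 e1 E1); lra).
  rewrite <- Tj. apply (enumerates_mono tau1 e1 E1). lia.
Qed.

Definition repeats (tau : Z -> R) (i : Z) : Prop := tau (i - 1)%Z = tau i.

Section TwoEnumerations.

Variables (tau1 tau2 : Z -> R) (e1 e2 : bseq).
Hypothesis E1 : enumerates E tau1 e1.
Hypothesis E2 : enumerates E tau2 e2.

(* Both enumerations list the same multiset of times: once they agree at an
   index, with the same repetition status, they agree at the next one. *)
Lemma enumerates_step i1 i2 :
  tau2 i2 = tau1 i1 -> (repeats tau1 i1 <-> repeats tau2 i2) ->
  tau2 (i2 + 1)%Z = tau1 (i1 + 1)%Z /\ (repeats tau1 (i1 + 1) <-> repeats tau2 (i2 + 1)).
Proof.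
  unfold repeats. intros IT II.
  replace (i1 + 1 - 1)%Z with i1 by lia. replace (i2 + 1 - 1)%Z with i2 by lia.
  pose proof (enumerates_repeat_iff tau1 e1 E1 i1) as P1.
  pose proof (enumerates_repeat_iff tau2 e2 E2 i2) as P2.
  pose proof (enumerates_no_triple tau1 e1 E1 i1) as Th1.
  pose proof (enumerates_no_triple tau2 e2 E2 i2) as Th2.
  rewrite IT in P2, Th2.
  destruct (Req_dec (tau2 (i2 + 1)%Z) (tau1 i1)) as [X2|X2].
  - assert (D : double_event E (tau1 i1)) by (apply P2; auto).
    assert (N1 : tau1 (i1 - 1)%Z <> tau1 i1) by (intros Y; apply Th2; split; [rewrite <- IT; apply II|]; auto).
    assert (X1 : tau1 (i1 + 1)%Z = tau1 i1) by (destruct (proj2 P1 D); auto; contradiction).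
    split; [congruence|]. rewrite IT, X1, X2. tauto.
  - assert (X1 : tau1 (i1 + 1)%Z <> tau1 i1).
    { intros X1. assert (D : double_event E (tau1 i1)) by (apply P1; auto).
      assert (N2 : tau2 (i2 - 1)%Z <> tau1 i1) by (intros Y; apply Th1; split; auto; apply II; rewrite IT; auto).
      destruct (proj2 P2 D); contradiction. }
    pose proof (proj1 E1 i1). pose proof (proj1 E2 i2).
    assert (G1 : tau1 i1 < tau1 (i1 + 1)%Z) by lra.
    assert (G2 : tau2 i2 < tau2 (i2 + 1)%Z) by lra.
    pose proof (enumerates_next_le tau1 e1 tau2 e2 i1 i2 E1 E2 ltac:(lra)).
    pose proof (enumerates_next_le tau2 e2 tau1 e1 i2 i1 E2 E1 ltac:(lra)).
    split; [lra|]. split; intros Y; exfalso; [apply X1|apply X2; rewrite <- IT]; auto.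
Qed.

Lemma enumerates_forward a1 a2 :
  tau2 a2 = tau1 a1 -> (repeats tau1 a1 <-> repeats tau2 a2) ->
  forall k : nat, tau2 (a2 + Z.of_nat k)%Z = tau1 (a1 + Z.of_nat k)%Z.
Proof.
  intros T0 I0 k.
  enough (tau2 (a2 + Z.of_nat k)%Z = tau1 (a1 + Z.of_nat k)%Z /\
          (repeats tau1 (a1 + Z.of_nat k) <-> repeats tau2 (a2 + Z.of_nat k))) by tauto.
  induction k as [|k [IT II]].
  - rewrite !Z.add_0_r. auto.
  - rewrite Nat2Z.inj_succ, <- Z.add_1_r, !Z.add_assoc. apply enumerates_step; auto.
Qed.

End TwoEnumerations.

Lemma enumerates_reflect tau e t0 :
  (forall l t, E l t -> E l (2 * t0 - t)) ->
  enumerates E tau e -> enumerates E (fun n => 2 * t0 - tau (- n)%Z) (fun n => e (- n)%Z).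
Proof.
  intros Hr [M [Ev U]]. split; [|split].
  - intros n. pose proof (M (- (n + 1))%Z). replace (- (n + 1) + 1)%Z with (- n)%Z in * by lia. lra.
  - intros n. apply Hr. auto.
  - intros l t Et. destruct (U l _ (Hr l t Et)) as [m [[Tm Em] Um]].
    exists (- m)%Z. split; [rewrite Z.opp_involutive; split; auto; lra|].
    intros n [Tn En]. rewrite (Um (- n)%Z); [lia|]. split; auto. lra.
Qed.

Lemma enumerates_first_of_pair tau e :
  enumerates E tau e -> forall i, exists a, tau a = tau i /\ ~ repeats tau a.
Proof.
  intros En i. unfold repeats. destruct (Req_dec (tau (i - 1)%Z) (tau i)) as [Eq|Ne].
  - exists (i - 1)%Z. split; auto. intros X. apply (enumerates_no_triple tau e En (i - 1)).
    replace (i - 1 + 1)%Z with i by lia. split; congruence.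
  - exists i. auto.
Qed.

End Enumerations.

Lemma enumerates_reverse E tau e :
  enumerates E tau e ->
  enumerates (fun l t => E l (- t)) (fun n => - tau (- n)%Z) (fun n => e (- n)%Z).
Proof.
  intros [M [Ev U]]. split; [|split].
  - intros n. pose proof (M (- (n + 1))%Z). replace (- (n + 1) + 1)%Z with (- n)%Z in * by lia. lra.
  - intros n. rewrite Ropp_involutive. auto.
  - intros l t Et. destruct (U l (- t) Et) as [m [[Tm Em] Um]].
    exists (- m)%Z. split; [rewrite Z.opp_involutive; split; auto; lra|].
    intros n [Tn En]. rewrite (Um (- n)%Z); [lia|]. split; auto. lra.
Qed.

(* Starting from a common time at the first index of its block, run the
   forward agreement to the right and, on the time-reversed enumerations,
   to the left. *)
Lemma enumerates_shift E tau1 e1 tau2 e2 :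
  enumerates E tau1 e1 -> enumerates E tau2 e2 -> exists s, forall n, tau2 n = tau1 (n + s)%Z.
Proof.
  intros E1 E2.
  destruct (enumerates_first_of_pair E tau2 e2 E2 0%Z) as [a2 [_ Fa2]].
  destruct (proj2 (proj2 E1) _ _ (proj1 (proj2 E2) a2)) as [m [[Tm _] _]].
  destruct (enumerates_first_of_pair E tau1 e1 E1 m) as [a1 [Ta1 Fa1]].
  assert (T0 : tau2 a2 = tau1 a1) by congruence.
  pose proof (enumerates_forward E tau1 tau2 e1 e2 E1 E2 a1 a2 T0 ltac:(tauto)) as FW.
  pose proof (enumerates_reverse E tau1 e1 E1) as R1.
  pose proof (enumerates_reverse E tau2 e2 E2) as R2.
  assert (I0 : repeats (fun n => - tau1 (- n)%Z) (- a1) <-> repeats (fun n => - tau2 (- n)%Z) (- a2)).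
  { unfold repeats. replace (- (- a1 - 1))%Z with (a1 + 1)%Z by lia.
    replace (- (- a2 - 1))%Z with (a2 + 1)%Z by lia. rewrite !Z.opp_involutive.
    pose proof (enumerates_repeat_iff E tau1 e1 E1 a1) as P1.
    pose proof (enumerates_repeat_iff E tau2 e2 E2 a2) as P2.
    unfold repeats in Fa1, Fa2. rewrite T0 in P2.
    split; intros X; [assert (D : double_event E (tau1 a1)) by (apply P1; left; lra)
                     |assert (D : double_event E (tau1 a1)) by (apply P2; left; lra)];
      [apply P2 in D|apply P1 in D]; destruct D; try lra; congruence. }
  pose proof (enumerates_forward _ _ _ _ _ R1 R2 (- a1)%Z (- a2)%Z
                ltac:(cbv beta; rewrite !Z.opp_involutive; lra) I0) as BW.
  exists (a1 - a2)%Z. intros n. destruct (Z_le_gt_dec a2 n) as [le|gt].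
  - specialize (FW (Z.to_nat (n - a2))). rewrite Z2Nat.id in FW by lia.
    replace (a2 + (n - a2))%Z with n in FW by lia. rewrite FW. f_equal. lia.
  - specialize (BW (Z.to_nat (a2 - n))). rewrite Z2Nat.id in BW by lia.
    replace (- (- a2 + (a2 - n)))%Z with n in BW by lia.
    replace (- (- a1 + (a2 - n)))%Z with (n + (a1 - a2))%Z in BW by lia. lra.
Qed.

Lemma enumerates_shift_labels E tau1 e1 tau2 e2 s :
  enumerates E tau1 e1 -> enumerates E tau2 e2 -> (forall n, tau2 n = tau1 (n + s)%Z) ->
  forall n, e2 n = e1 (n + s)%Z \/ double_event E (tau2 n).
Proof.
  intros E1 E2 Hs n. pose proof (proj1 (proj2 E1) (n + s)%Z) as A. pose proof (proj1 (proj2 E2) n) as B.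
  rewrite <- Hs in A. destruct (e2 n), (e1 (n + s)%Z); auto; right; split; auto.
Qed.

(* The half-turn about a point with half-integer coordinates preserves the
   lattice lines, so it maps crossings to crossings. *)
Lemma crossings_reflect x0 y0 a t0 px py P Q :
  is_int (x0 + t0 - px) -> is_int (y0 + a * t0 - py) -> 2 * px = IZR P -> 2 * py = IZR Q ->
  forall l t, crosses x0 y0 a l t -> crosses x0 y0 a l (2 * t0 - t).
Proof.
  intros [k1 Hk1] [k2 Hk2] HP HQ l t Hc. destruct l; simpl in *; destruct Hc as [m Hm].
  - exists (2 * k1 + P - m)%Z. rewrite minus_IZR, plus_IZR, mult_IZR. lra.
  - exists (2 * k2 + Q - m)%Z. rewrite minus_IZR, plus_IZR, mult_IZR. lra.
Qed.

Lemma reflected_cutting_sequence x0 y0 a eps t0 :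
  (forall l t, crosses x0 y0 a l t -> crosses x0 y0 a l (2 * t0 - t)) ->
  cutting_sequence x0 y0 a eps ->
  exists tau s, enumerates (crosses x0 y0 a) tau eps /\ forall n,
    2 * t0 - tau (- n)%Z = tau (n + s)%Z /\
    (eps (- n)%Z = eps (n + s)%Z \/ double_event (crosses x0 y0 a) (tau (n + s)%Z)).
Proof.
  intros Hr [tau En]. pose proof (enumerates_reflect _ tau eps t0 Hr En) as ER.
  destruct (enumerates_shift _ _ _ _ _ En ER) as [s Hs]. exists tau, s. split; [exact En|].
  intros n. split; auto.
  destruct (enumerates_shift_labels _ _ _ _ _ s En ER Hs n) as [X|X]; auto. right. rewrite <- Hs. auto.
Qed.

Lemma irrational_no_relation a (Irr : irrational a) (u w : Z) : u <> 0%Z -> a * IZR u <> IZR w.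
Proof.
  intros Hu E. apply (Irr w u Hu). rewrite <- E. field. apply not_0_IZR; auto.
Qed.

Lemma IZR_neq_half z : IZR z <> 1 / 2.
Proof.
  intros E. assert (0 < z < 1)%Z by (split; apply lt_IZR; lra). lia.
Qed.

Lemma through_D_even_symmetric eps :
  cut_seq_through (fun P => P = ptD) eps -> even_symmetric eps.
Proof.
  intros [x0 [y0 [a [[Ha Irr] [[P [-> [t0 [Hx Hy]]]] CS]]]]]. simpl in Hx, Hy.
  destruct (reflected_cutting_sequence x0 y0 a eps t0
              (crossings_reflect x0 y0 a t0 _ _ 1 1 Hx Hy ltac:(simpl; lra) ltac:(simpl; lra)) CS)
    as [tau [s [En Hs]]].
  destruct Hx as [k1 Hk1], Hy as [k2 Hk2].
  assert (NoDouble : forall t, ~ double_event (crosses x0 y0 a) t).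
  { intros t [[m1 Hm1] [m2 Hm2]].
    apply (irrational_no_relation a Irr (2 * (m1 - k1) - 1) (2 * (m2 - k2) - 1)); [lia|].
    rewrite !minus_IZR, !mult_IZR, !minus_IZR. simpl. nra. }
  assert (NoT0 : forall l, ~ crosses x0 y0 a l t0).
  { intros [] [m Hm]; simpl in Hm; [apply (IZR_neq_half (m - k1))|apply (IZR_neq_half (m - k2))];
      rewrite minus_IZR; lra. }
  destruct (Z.Even_or_Odd s) as [[N HN]|[N HN]].
  - exfalso. destruct (Hs (- N)%Z) as [T _]. rewrite Z.opp_involutive in T.
    replace (- N + s)%Z with N in T by lia.
    apply (NoT0 (eps N)). replace t0 with (tau N) by lra. apply (proj1 (proj2 En)).
  - exists (N + 1)%Z. intros k Hk. destruct (Hs (k - N)%Z) as [_ [L|L]]; [|exfalso; eapply NoDouble; eauto].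
    replace (- (k - N))%Z with (N + 1 - k - 1)%Z in L by lia.
    replace (k - N + s)%Z with (N + 1 + k)%Z in L by lia. auto.
Qed.

Lemma through_BC_reflection x0 y0 a P :
  irrational a -> (P = ptB \/ P = ptC) -> through x0 y0 a P ->
  exists t0 l, crosses x0 y0 a l t0 /\ (forall t, ~ double_event (crosses x0 y0 a) t) /\
    (forall l t, crosses x0 y0 a l t -> crosses x0 y0 a l (2 * t0 - t)).
Proof.
  intros Irr HP [t0 [Hx Hy]]. exists t0. destruct HP as [->| ->]; simpl in Hx, Hy.
  - exists V. pose proof (crossings_reflect x0 y0 a t0 _ _ 1 0 Hx Hy ltac:(simpl; lra) ltac:(simpl; lra)) as Hr.
    destruct Hx as [k1 Hk1], Hy as [k2 Hk2]. split; [|split; auto].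
    + simpl. exists k2. lra.
    + intros t [[m1 Hm1] [m2 Hm2]].
      apply (irrational_no_relation a Irr (2 * (m1 - k1) - 1) (2 * (m2 - k2))); [lia|].
      rewrite !minus_IZR, !mult_IZR, !minus_IZR. simpl. nra.
  - exists H. pose proof (crossings_reflect x0 y0 a t0 _ _ 0 1 Hx Hy ltac:(simpl; lra) ltac:(simpl; lra)) as Hr.
    destruct Hx as [k1 Hk1], Hy as [k2 Hk2]. split; [|split; auto].
    + simpl. exists k1. lra.
    + intros t [[m1 Hm1] [m2 Hm2]]. destruct (Z.eq_dec (m1 - k1) 0) as [e|ne].
      * apply (IZR_neq_half (m2 - k2)). assert (IZR m1 = IZR k1) by (f_equal; lia).
        rewrite minus_IZR. nra.
      * apply (irrational_no_relation a Irr (2 * (m1 - k1)) (2 * (m2 - k2) - 1)); [lia|].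
        rewrite !minus_IZR, !mult_IZR, !minus_IZR. simpl. nra.
Qed.

Lemma through_BC_odd_symmetric eps :
  cut_seq_through (fun P => P = ptB \/ P = ptC) eps -> odd_symmetric eps.
Proof.
  intros [x0 [y0 [a [[Ha Irr] [[P [HP Th]] CS]]]]].
  destruct (through_BC_reflection x0 y0 a P Irr HP Th) as [t0 [l [Ev [NoDouble Hr]]]].
  destruct (reflected_cutting_sequence x0 y0 a eps t0 Hr CS) as [tau [s [En Hs]]].
  destruct (proj2 (proj2 En) l t0 Ev) as [j [[Tj Ej] _]].
  destruct (Z.Even_or_Odd s) as [[N HN]|[N HN]].
  - exists N. intros k Hk. destruct (Hs (k - N)%Z) as [_ [L|L]]; [|exfalso; eapply NoDouble; eauto].
    replace (- (k - N))%Z with (N - k)%Z in L by lia.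
    replace (k - N + s)%Z with (N + k)%Z in L by lia. auto.
  - exfalso. destruct (Hs (- j)%Z) as [T [L|L]]; [|eapply NoDouble; eauto].
    rewrite Z.opp_involutive in T, L.
    assert (j = - j + s)%Z by (apply (enumerates_inj _ tau eps En); [lra|auto]). lia.
Qed.

(* Through the corner, [t0] is the only double crossing; the reflection swaps
   its two indices [c], [c + 1]. *)
Lemma through_A_almost_symmetric eps :
  cut_seq_through (fun P => P = ptA) eps -> almost_symmetric eps.
Proof.
  intros [x0 [y0 [a [[Ha Irr] [[P [-> [t0 [Hx Hy]]]] CS]]]]]. simpl in Hx, Hy.
  destruct (reflected_cutting_sequence x0 y0 a eps t0
              (crossings_reflect x0 y0 a t0 _ _ 0 0 Hx Hy ltac:(simpl; lra) ltac:(simpl; lra)) CS)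
    as [tau [s [En Hs]]].
  destruct Hx as [k1 Hk1], Hy as [k2 Hk2].
  assert (OnlyT0 : forall t, double_event (crosses x0 y0 a) t -> t = t0).
  { intros t [[m1 Hm1] [m2 Hm2]]. destruct (Z.eq_dec (m1 - k1) 0) as [e|ne].
    - assert (IZR m1 = IZR k1) by (f_equal; lia). lra.
    - exfalso. apply (irrational_no_relation a Irr (m1 - k1) (m2 - k2)); [lia|].
      rewrite !minus_IZR. nra. }
  destruct (proj2 (proj2 En) H t0 ltac:(exists k1; lra)) as [jH [[TH EH] _]].
  destruct (proj2 (proj2 En) V t0 ltac:(exists k2; simpl; lra)) as [jV [[TV EV] _]].
  assert (Idx : forall m, tau m = t0 -> m = jH \/ m = jV).
  { intros m Tm. destruct (eps m) eqn:Em; [left|right]; apply (enumerates_inj _ tau eps En); congruence. }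
  assert (Hne : jH <> jV) by (intros e; subst; congruence).
  set (c := Z.min jH jV).
  assert (Tc : tau c = t0) by (unfold c; destruct (Z.min_spec jH jV) as [[_ ->]|[_ ->]]; auto).
  assert (Tc1 : tau (c + 1)%Z = t0).
  { pose proof (enumerates_mono _ tau eps En c (c + 1) ltac:(lia)).
    pose proof (enumerates_mono _ tau eps En (c + 1) (Z.max jH jV) ltac:(unfold c; lia)).
    assert (tau (Z.max jH jV) = t0) by (destruct (Z.max_spec jH jV) as [[_ ->]|[_ ->]]; auto). lra. }
  assert (Ic : forall m, tau m = t0 -> m = c \/ m = (c + 1)%Z).
  { intros m Tm. pose proof (Idx m Tm) as [A|A]; pose proof (Idx (c + 1)%Z Tc1) as [B|B];
    unfold c in *; lia. }
  assert (Lc : eps c <> eps (c + 1)%Z).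
  { intros E. assert (c = c + 1)%Z by (apply (enumerates_inj _ tau eps En); congruence). lia. }
  assert (Hs1 : s = (2 * c + 1)%Z).
  { destruct (Hs (- c)%Z) as [T1 _]. destruct (Hs (- (c + 1))%Z) as [T2 _].
    rewrite Z.opp_involutive in T1, T2. rewrite Tc in T1. rewrite Tc1 in T2.
    assert (A1 : tau (- c + s)%Z = t0) by lra. assert (A2 : tau (- (c + 1) + s)%Z = t0) by lra.
    apply Ic in A1. apply Ic in A2. lia. }
  exists (c + 1)%Z. split.
  - intros k Hk. destruct (Hs (k - c)%Z) as [_ [L|L]].
    + replace (- (k - c))%Z with (c + 1 - k - 1)%Z in L by lia.
      replace (k - c + s)%Z with (c + 1 + k)%Z in L by lia. auto.
    + exfalso. apply OnlyT0, Ic in L. lia.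
  - replace (c + 1 - 1)%Z with c by lia. auto.
Qed.

Lemma cut_seq_through_weaken (Q1 Q2 : R * R -> Prop) eps :
  (forall P, Q1 P -> Q2 P) -> cut_seq_through Q1 eps -> cut_seq_through Q2 eps.
Proof.
  intros HQ [x0 [y0 [a [U [[P [HP Th]] CS]]]]].
  exists x0, y0, a. split; [exact U|]. split; [exists P; auto|exact CS].
Qed.

Lemma cut_seq_through_weierstrass eps :
  cut_seq_through weierstrass eps ->
  cut_seq_through (fun P => P = ptA) eps \/ cut_seq_through (fun P => P = ptB \/ P = ptC) eps \/
  cut_seq_through (fun P => P = ptD) eps.
Proof.
  intros [x0 [y0 [a [U [[P [HP Th]] CS]]]]].
  assert (Via : forall Q : R * R -> Prop, Q P -> cut_seq_through Q eps).
  { intros Q HQ. exists x0, y0, a. split; [exact U|]. split; [exists P; auto|exact CS]. }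
  destruct HP as [HP|[HP|[HP|HP]]]; [left|right; left|right; left|right; right]; apply Via; auto.
Qed.

Theorem lemma4p1 (eps : bseq) :
  sturmian eps ->
  (symmetric eps <-> cut_seq_through weierstrass eps) /\
  (even_symmetric eps <-> cut_seq_through (fun P => P = ptD) eps) /\
  (almost_symmetric eps <-> cut_seq_through (fun P => P = ptA) eps) /\
  (odd_symmetric eps <-> cut_seq_through (fun P => P = ptB \/ P = ptC) eps).
Proof.
  intros St.
  pose proof (conj (even_symmetric_through_D eps St) (through_D_even_symmetric eps)) as D.
  pose proof (conj (almost_symmetric_through_A eps St) (through_A_almost_symmetric eps)) as A.
  pose proof (conj (odd_symmetric_through_BC eps St) (through_BC_odd_symmetric eps)) as BC.
  repeat split; try tauto.
  - unfold weierstrass. intros [O|[E|Al]];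
      [eapply cut_seq_through_weaken, BC, O|eapply cut_seq_through_weaken, D, E
      |eapply cut_seq_through_weaken, A, Al]; simpl; tauto.
  - intros W. unfold symmetric.
    destruct (cut_seq_through_weierstrass eps W) as [X|[X|X]]; tauto.
Qed.
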